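(* Let $\psi\in\mathfrak M^+_\infty$, $\beta\in\mathbb R$, and let $n\in\mathbb N$ satisfy $\eta(n)-n\ge a>1$, $\mu(n)\ge b>2$. Define $$\Psi^*_{\beta,n}(t)=\psi(n)\sum_{k=2n-[\eta(n)]+1}^{n-1}\Big(1-\frac{n-k}{[\eta(n)]-n}\Big)\cos\Big(kt-\frac{\beta\pi}2\Big)+\sum_{k=n}^\infty\psi(k)\cos\Big(kt-\frac{\beta\pi}2\Big),$$ where $[\cdot]$ is the integer part. Then: (i) for $0<|t|\le\pi$, $\displaystyle|\Psi^*_{\beta,n}(t)|\le\pi^2\Big(\frac{2(b+1)^2}{b^2}+\frac{a}{a-1}\Big)\frac{\psi(n)}{\eta(n)-n}\,\frac1{t^2}$; (ii) for all $t\in\mathbb R$, $\displaystyle|\Psi^*_{\beta,n}(t)|\le\Big(\frac{2b}{b-2}+\frac1a+\frac12\Big)\psi(n)(\eta(n)-n)$; (iii) for every $1\le q\le\infty$, $\displaystyle\|\Psi^*_{\beta,n}\|_q\le2(1+\pi^2)\Big(\frac{2b}{b-2}+\frac{a}{a-1}\Big)\psi(n)(\eta(n)-n)^{1-1/q}$, where the norm is taken over one period.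
   Context: Let $\mathfrak M$ be the set of positive, continuous, convex-downward functions $\psi(t)$ of $t\ge1$ with $\lim_{t\to\infty}\psi(t)=0$. For $\psi\in\mathfrak M$ put $\eta(t)=\eta(\psi;t)=\psi^{-1}(\psi(t)/2)$, where $\psi^{-1}$ is the inverse function of $\psi$, and $\mu(t)=\mu(\psi;t)=t/(\eta(t)-t)$. Let $\mathfrak M^+_\infty$ be the set of $\psi\in\mathfrak M$ for which $\mu(\psi;t)$ increases monotonically to $\infty$ as $t\to\infty$. $\|g\|_q=(\int_0^{2\pi}|g|^q)^{1/q}$ for $1\le q<\infty$ and $\|g\|_\infty=\operatorname{ess\,sup}|g|$. *)

From Stdlib Require Import Reals Lra ZArith List ClassicalEpsilon.
Import ListNotations.
Open Scope R_scope.

(** The class 𝔐: positive, continuous, convex (downward) functions on [1,∞)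
    tending to 0.  psi is a total function R -> R; only its values on [1,∞)
    matter. *)
Definition in_M (psi : R -> R) : Prop :=
  (forall t, 1 <= t -> 0 < psi t) /\
  (forall t, 1 <= t -> forall eps, 0 < eps -> exists delta, 0 < delta /\
      forall s, 1 <= s -> Rabs (s - t) < delta -> Rabs (psi s - psi t) < eps) /\
  (forall x y l, 1 <= x -> 1 <= y -> 0 <= l <= 1 ->
      psi (l * x + (1 - l) * y) <= l * psi x + (1 - l) * psi y) /\
  (forall eps, 0 < eps -> exists T, forall t, T <= t -> Rabs (psi t) < eps).

(** eta(t) = psi^{-1}(psi(t)/2): the (unique, psi being strictly decreasing
    for psi in 𝔐) point s >= 1 with psi s = psi t / 2. *)
Definition eta (psi : R -> R) (t : R) : R :=
  epsilon (inhabits 0) (fun s => 1 <= s /\ psi s = psi t / 2).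

Definition mu (psi : R -> R) (t : R) : R := t / (eta psi t - t).

Definition in_M_plus_inf (psi : R -> R) : Prop :=
  in_M psi /\
  (forall s t, 1 <= s -> s <= t -> mu psi s <= mu psi t) /\
  (forall A, exists T, 1 <= T /\ forall t, T <= t -> A <= mu psi t).

(** Finite sum over integers lo..hi (empty if hi < lo). *)
Definition sumZ (lo hi : Z) (f : Z -> R) : R :=
  fold_right Rplus 0
    (map (fun i => f (lo + Z.of_nat i)%Z) (seq 0 (Z.to_nat (hi - lo + 1)))).

(** Value of a series (meaningful when it converges; limits are unique). *)
Definition series_value (u : nat -> R) : R :=
  epsilon (inhabits 0) (fun l => infinite_sum u l).

Definition ipart (x : R) : R := IZR (Int_part x).

Definition tail_term (psi : R -> R) (beta : R) (n : nat) (t : R) (i : nat) : R :=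
  psi (INR (n + i)) * cos (INR (n + i) * t - beta * PI / 2).

Definition PsiStar (psi : R -> R) (beta : R) (n : nat) (t : R) : R :=
  psi (INR n) *
    sumZ (2 * Z.of_nat n - Int_part (eta psi (INR n)) + 1)%Z (Z.of_nat n - 1)%Z
      (fun k => (1 - (INR n - IZR k) / (ipart (eta psi (INR n)) - INR n))
                * cos (IZR k * t - beta * PI / 2))
  + series_value (tail_term psi beta n t).

(** x^q for x >= 0, q >= 1 real (with 0^q = 0). *)
Definition rpow (x q : R) : R := if Rle_dec x 0 then 0 else Rpower x q.

From Stdlib Require Import Reals Lra Lia Psatz ZArith List ClassicalEpsilon.
From Coquelicot Require Import Coquelicot.
Open Scope R_scope.

(** Write [h = eta(n) - n] and [m = [eta(n)] - n].  Psi* is a cosine series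
    whose coefficient of frequency [n - m - 1 + j] ([coef j]) is 0 for [j <= 1],
    then rises linearly to psi(n) at [j = m + 1], then continues with the tail
    psi(n), psi(n+1), ...

    The iterates [x_(j+1) = eta(x_j)], [x_0 = n],
       satisfy [psi(x_j) = psi(n)/2^j], and monotonicity of [mu] gives
       [x_(j+1) - x_j <= h (1 + h/n)^j] with [h/n <= 1/b].  Comparing the tail
       with a Riemann sum along the [x_j] gives
       [sum_(k>=n) psi(k) <= psi(n) (1 + 2bh/(b-1))], hence convergence,
       continuity and, adding the ramp, bound (ii).
    2. Decay ([kernel_abel_bound]).  [cos x] is a second difference of
       [-cos(x - t) / (4 sin^2(t/2))]; summing by parts twice bounds Psi* by the
       total variation of the second differences of [coef], which convexity
       bounds by [2 psi(n)/m + 2 (psi(n) - psi(n+1)) = O(psi(n)/h)]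
       ([first_difference_bound]).  With [sin^2(t/2) >= 0.099 t^2] this is (i).
    3. [L^q] ([bound_Lq]).  The minimum of (i) and (ii) is at most a constant
       times [W(t) = (1+ht)^-2 + (1+h(2 PI - t))^-2], whose integral over a
       period is at most [2/h]. *)

Fixpoint fsum (f : nat -> R) (N : nat) : R :=
  match N with O => 0 | S k => fsum f k + f k end.

Lemma fsum_ext f g N : (forall i, (i < N)%nat -> f i = g i) -> fsum f N = fsum g N.
Proof.
  induction N; simpl; intros H; auto.
  rewrite IHN by (intros; apply H; lia). rewrite H by lia. reflexivity.
Qed.

Lemma fsum_le f g N : (forall i, (i < N)%nat -> f i <= g i) -> fsum f N <= fsum g N.
Proof.
  induction N; simpl; intros H; [lra|].
  assert (f N <= g N) by (apply H; lia).
  assert (fsum f N <= fsum g N) by (apply IHN; intros; apply H; lia). lra.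
Qed.

Lemma fsum_scal c f N : fsum (fun i => c * f i) N = c * fsum f N.
Proof. induction N; simpl; [ring|]. rewrite IHN; ring. Qed.

Lemma fsum_minus f g N : fsum f N - fsum g N = fsum (fun i => f i - g i) N.
Proof. induction N; simpl; [ring|]. rewrite <- IHN; ring. Qed.

Lemma fsum_const c N : fsum (fun _ => c) N = INR N * c.
Proof. induction N; simpl fsum; [simpl; ring|]. rewrite IHN, S_INR; ring. Qed.

Lemma fsum_abs f N : Rabs (fsum f N) <= fsum (fun i => Rabs (f i)) N.
Proof.
  induction N; simpl; [rewrite Rabs_R0; lra|].
  eapply Rle_trans; [apply Rabs_triang|]. lra.
Qed.

Lemma fsum_split f N M : fsum f (N + M) = fsum f N + fsum (fun i => f (N + i)%nat) M.
Proof.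
  induction M; simpl; [rewrite Nat.add_0_r; ring|].
  rewrite Nat.add_succ_r; simpl. rewrite IHM; ring.
Qed.

Lemma fsum_shift f N : fsum f (S N) = f O + fsum (fun i => f (S i)) N.
Proof. replace (S N) with (1 + N)%nat by lia. rewrite fsum_split. simpl. ring. Qed.

Lemma fsum_telescope f N : fsum (fun i => f (S i) - f i) N = f N - f O.
Proof. induction N; simpl; [ring|]. rewrite IHN; ring. Qed.

Lemma fsum_mono f N M : (N <= M)%nat -> (forall i, 0 <= f i) -> fsum f N <= fsum f M.
Proof.
  intros H Hf. replace M with (N + (M - N))%nat by lia. rewrite fsum_split.
  assert (0 <= fsum (fun i => f (N + i)%nat) (M - N)).
  { rewrite <- (Rmult_0_r (INR (M - N))), <- fsum_const. apply fsum_le; auto. }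
  lra.
Qed.

Lemma sum_f_R0_fsum f N : sum_f_R0 f N = fsum f (S N).
Proof. induction N; simpl; [ring|]. rewrite IHN; simpl; ring. Qed.

Lemma fold_right_fsum g K : fold_right Rplus 0 (map g (seq 0 K)) = fsum g K.
Proof.
  induction K; [reflexivity|].
  rewrite seq_S, map_app, fold_right_app. simpl. rewrite <- IHK.
  generalize (map g (seq 0 K)). intros l; induction l; simpl; [ring|]. rewrite IHl; ring.
Qed.

Lemma fsum_linear K : fsum (fun i => INR i + 1) K = INR K * (INR K + 1) / 2.
Proof. induction K; simpl fsum; [simpl; field|]. rewrite IHK, S_INR. field. Qed.

Lemma fsum_geometric_le r J : 0 <= r < 1 -> fsum (fun j => r ^ j) J <= 1 / (1 - r).
Proof.
  intros Hr.
  assert (E : fsum (fun j => r ^ j) J = (1 - r ^ J) / (1 - r)).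
  { induction J; simpl fsum; [simpl; field; lra|]. rewrite IHJ. simpl. field. lra. }
  rewrite E. unfold Rdiv. apply Rmult_le_compat_r.
  - left; apply Rinv_0_lt_compat; lra.
  - pose proof (pow_le r J ltac:(lra)). lra.
Qed.

Lemma lim_abs_le (u v : nat -> R) (L K : R) :
  Un_cv u L -> Un_cv v 0 -> (forall k, Rabs (u k) <= K + v k) -> Rabs L <= K.
Proof.
  intros Hu Hv H. destruct (Rle_dec (Rabs L) K) as [|Hn]; auto. exfalso.
  set (e := (Rabs L - K) / 2). assert (He : e > 0) by (unfold e; lra).
  destruct (Hu e He) as [N1 H1]. destruct (Hv e He) as [N2 H2].
  specialize (H1 (N1 + N2)%nat ltac:(lia)). specialize (H2 (N1 + N2)%nat ltac:(lia)).
  specialize (H (N1 + N2)%nat). unfold Rdist in *. rewrite Rminus_0_r in H2.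
  pose proof (Rabs_triang_inv L (u (N1 + N2)%nat)). rewrite Rabs_minus_sym in H1.
  pose proof (Rle_abs (v (N1 + N2)%nat)). unfold e in *. lra.
Qed.

Lemma exists_nat_ge (T : R) : exists N : nat, T <= INR N.
Proof. destruct (INR_unbounded T) as [N HN]; exists N; lra. Qed.

Lemma div_unit_interval x d : 0 < d -> 0 <= x <= d -> 0 <= x / d <= 1.
Proof.
  intros Hd Hx. split.
  - apply Rmult_le_pos; [lra| left; apply Rinv_0_lt_compat; lra].
  - apply Rmult_le_reg_r with d; auto. unfold Rdiv; rewrite Rmult_assoc, Rinv_l by lra. lra.
Qed.

Lemma psi_pos psi : in_M psi -> forall x, 1 <= x -> 0 < psi x.
Proof. intros [H _]; auto. Qed.

(** A convex function tending to 0 at infinity is strictly decreasing: a rise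
    between [x] and [y] would, by convexity, persist all the way to infinity. *)
Lemma psi_decr psi : in_M psi -> forall x y, 1 <= x -> x < y -> psi y < psi x.
Proof.
  intros [Hpos [_ [Hcv Hlim]]] x y Hx Hxy.
  destruct (Rlt_dec (psi y) (psi x)) as [|Hn]; auto. exfalso.
  destruct (Hlim (psi x) (Hpos x Hx)) as [T HT].
  set (z := Rmax T (y + 1)).
  assert (Hz1 : T <= z) by apply Rmax_l. assert (Hz2 : y + 1 <= z) by apply Rmax_r.
  set (l := (z - y) / (z - x)).
  assert (Hl : 0 <= l <= 1) by (unfold l; apply div_unit_interval; lra).
  assert (H1l : 0 < 1 - l).
  { unfold l. replace (1 - (z - y) / (z - x)) with ((y - x) / (z - x)) by (field; lra).
    apply Rmult_lt_0_compat; [lra| apply Rinv_0_lt_compat; lra]. }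
  pose proof (Hcv x z l Hx ltac:(lra) Hl) as Hy.
  replace (l * x + (1 - l) * z) with y in Hy by (unfold l; field; lra).
  assert (psi y <= psi z).
  { apply Rmult_le_reg_l with (1 - l); auto.
    assert (l * psi y >= l * psi x) by (apply Rmult_ge_compat_l; lra). nra. }
  specialize (HT z Hz1). pose proof (Rle_abs (psi z)). lra.
Qed.

Lemma psi_decr_le psi : in_M psi -> forall x y, 1 <= x -> x <= y -> psi y <= psi x.
Proof.
  intros H x y Hx Hxy. destruct (Req_dec x y); [subst; lra|].
  left; apply psi_decr; auto; lra.
Qed.

(** Extending [psi] by the constant [psi 1] on [(-oo,1]] gives a continuous
    function on [R], to which the intermediate value theorem applies. *)
Lemma psi_extension_continuous psi : in_M psi -> continuity (fun s => psi (Rmax 1 s)).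
Proof.
  intros [_ [Hc _]] x. unfold continuity_pt, continue_in, limit1_in, limit_in.
  intros eps Heps. simpl. unfold Rdist.
  destruct (Hc (Rmax 1 x) (Rmax_l _ _) eps Heps) as [d [Hd Hd2]].
  exists d; split; auto. intros y [_ Hy].
  apply Hd2; [apply Rmax_l|].
  assert (Rabs (Rmax 1 y - Rmax 1 x) <= Rabs (y - x)).
  { unfold Rmax; destruct (Rle_dec 1 y); destruct (Rle_dec 1 x); unfold Rabs;
      repeat match goal with |- context [Rcase_abs ?a] => destruct (Rcase_abs a) end; lra. }
  lra.
Qed.

(** [eta psi t] is well defined: a point [s >= 1] with [psi s = psi t / 2]
    exists by the intermediate value theorem. *)
Lemma eta_spec psi t : in_M psi -> 1 <= t ->
  1 <= eta psi t /\ psi (eta psi t) = psi t / 2.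
Proof.
  intros HM Ht. unfold eta. apply epsilon_spec.
  pose proof HM as [Hpos [_ [_ Hlim]]].
  assert (Hp := Hpos t Ht).
  destruct (Hlim (psi t / 2) ltac:(lra)) as [T HT].
  set (T' := Rmax T (t + 1)).
  assert (HT1 : T <= T') by apply Rmax_l. assert (HT2 : t + 1 <= T') by apply Rmax_r.
  set (f := fun s => psi t / 2 - psi (Rmax 1 s)).
  assert (Hf : continuity f).
  { unfold f. apply continuity_minus; [apply continuity_const; intros ? ?; auto|].
    apply psi_extension_continuous; auto. }
  assert (Hmt : Rmax 1 t = t) by (apply Rmax_right; lra).
  assert (HmT : Rmax 1 T' = T') by (apply Rmax_right; lra).
  destruct (IVT f t T' Hf ltac:(lra)) as [z [Hz Hfz]].
  - unfold f; rewrite Hmt; lra.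
  - unfold f; rewrite HmT. specialize (HT T' HT1). pose proof (Rle_abs (psi T')). lra.
  - exists z. unfold f in Hfz. rewrite Rmax_right in Hfz by lra. split; lra.
Qed.

Lemma eta_gt psi t : in_M psi -> 1 <= t -> t < eta psi t.
Proof.
  intros HM Ht. destruct (eta_spec psi t HM Ht) as [H1 H2].
  pose proof (psi_pos psi HM t Ht).
  destruct (Rlt_dec t (eta psi t)) as [|Hn]; auto. exfalso.
  assert (psi t <= psi (eta psi t)) by (apply psi_decr_le; auto; lra). lra.
Qed.

(** ** Comparing the tail sum with a Riemann sum along the [eta]-iterates *)

(** [clip z] is [z] truncated to [[0,1]]; [fun y => clip (y - k)] is the
    primitive of the indicator of [[k, k+1]]. *)
Definition clip (z : R) : R := Rmin 1 (Rmax 0 z).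

Ltac case_minmax :=
  unfold clip, Rmax;
  repeat match goal with |- context [Rle_dec ?a ?b] => destruct (Rle_dec a b) end;
  unfold Rmin;
  repeat match goal with |- context [Rle_dec ?a ?b] => destruct (Rle_dec a b) end.

Lemma clip_mono x y : x <= y -> clip x <= clip y.
Proof. intros. case_minmax; lra. Qed.

Lemma clip_sum (n : nat) y L : INR n <= y ->
  fsum (fun i => clip (y - INR n - INR i)) L = Rmin y (INR n + INR L) - INR n.
Proof.
  intros Hy. induction L; simpl fsum.
  - simpl INR. rewrite Rplus_0_r. case_minmax; lra.
  - rewrite IHL, S_INR. case_minmax; lra.
Qed.

Fixpoint eta_iter psi (x : R) (j : nat) : R :=
  match j with O => x | S k => eta psi (eta_iter psi x k) end.

Lemma eta_iter_spec psi x : in_M psi -> 1 <= x -> forall j,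
  x <= eta_iter psi x j /\ psi (eta_iter psi x j) = psi x / 2 ^ j.
Proof.
  intros HM Hx; induction j; simpl.
  - split; [lra| field].
  - destruct IHj as [H1 H2].
    destruct (eta_spec psi (eta_iter psi x j) HM ltac:(lra)) as [_ H4].
    pose proof (eta_gt psi (eta_iter psi x j) HM ltac:(lra)).
    split; [lra|]. rewrite H4, H2. field. apply pow_nonzero; lra.
Qed.

Definition mu_monotone (psi : R -> R) : Prop :=
  forall s t, 1 <= s -> s <= t -> mu psi s <= mu psi t.

Lemma halved_ratio_bound b h N : 2 < b -> 0 < h -> 0 < N -> b * h <= N ->
  0 <= (1 + h / N) / 2 < 1 /\ 1 / (1 - (1 + h / N) / 2) <= 2 * b / (b - 1).
Proof.
  intros Hb Hh HN Hbh.
  assert (Hr0 : 0 <= h / N) by (apply Rmult_le_pos; [lra| left; apply Rinv_0_lt_compat; lra]).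
  assert (Hr1 : h / N <= 1 / b).
  { apply Rmult_le_reg_r with (N * b); [nra|].
    replace (h / N * (N * b)) with (h * b) by (field; lra).
    replace (1 / b * (N * b)) with N by (field; lra). lra. }
  assert (Hb2 : 1 / b < 1 / 2).
  { apply Rmult_lt_reg_r with (2 * b); [lra|]. replace (1 / b * (2 * b)) with 2 by (field; lra). lra. }
  split; [lra|].
  set (rho := 1 + h / N).
  assert (Hb1 : rho * b <= b + 1).
  { replace (b + 1) with ((1 + 1 / b) * b) by (field; lra). apply Rmult_le_compat_r; unfold rho; lra. }
  assert (Hrho : rho < 2) by (unfold rho; lra).
  apply Rmult_le_reg_r with ((1 - rho / 2) * (b - 1)); [nra|].
  replace (1 / (1 - rho / 2) * ((1 - rho / 2) * (b - 1))) with (b - 1) by (field; lra).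
  replace (2 * b / (b - 1) * ((1 - rho / 2) * (b - 1))) with (2 * b * (1 - rho / 2)) by (field; lra).
  nra.
Qed.

Section MonotoneMu.

Variables (psi : R -> R) (n : nat).
Hypothesis HM : in_M psi.
Hypothesis Hn : 1 <= INR n.

(** [riemann T y = sum_(i<T) psi(n+1+i) * clip(y-n-i)]: a piecewise linear
    function of [y] whose slope on [[k, k+1]] is [psi(k+1) <= psi(y)]. *)
Definition riemann (T : nat) (y : R) : R :=
  fsum (fun i => psi (INR (n + 1 + i)) * clip (y - INR n - INR i)) T.

Lemma riemann_increment T x y : INR n <= x -> x <= y ->
  riemann T y - riemann T x <= psi x * (y - x).
Proof.
  intros Hx Hxy. unfold riemann. rewrite fsum_minus.
  apply Rle_trans with
    (fsum (fun i => psi x * (clip (y - INR n - INR i) - clip (x - INR n - INR i))) T).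
  - apply fsum_le. intros i Hi.
    assert (Hc : clip (x - INR n - INR i) <= clip (y - INR n - INR i)) by (apply clip_mono; lra).
    destruct (Req_dec (clip (x - INR n - INR i)) (clip (y - INR n - INR i))) as [Heq|Hne].
    + rewrite Heq. lra.
    + (* the clip only moves while [x < n + i + 1], where [psi(n+1+i) <= psi x] *)
      assert (Hlt : x - INR n - INR i < 1).
      { destruct (Rlt_dec (x - INR n - INR i) 1); auto. exfalso. apply Hne. case_minmax; lra. }
      assert (psi (INR (n + 1 + i)) <= psi x).
      { apply psi_decr_le; auto; [lra|]. rewrite !plus_INR. simpl INR. lra. }
      rewrite <- Rmult_minus_distr_l. apply Rmult_le_compat_r; lra.
  - rewrite fsum_scal, <- fsum_minus, !clip_sum by lra.
    pose proof (psi_pos psi HM x ltac:(lra)).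
    apply Rmult_le_compat_l; [lra|]. case_minmax; lra.
Qed.

Lemma riemann_full T y : INR n + INR T <= y ->
  riemann T y = fsum (fun i => psi (INR (n + 1 + i))) T.
Proof.
  intros H. unfold riemann. apply fsum_ext. intros i Hi.
  assert (INR i + 1 <= INR T) by (rewrite <- S_INR; apply le_INR; lia).
  replace (clip (y - INR n - INR i)) with 1 by (case_minmax; lra). ring.
Qed.

Lemma riemann_start T : riemann T (INR n) = 0.
Proof.
  unfold riemann. rewrite <- (Rmult_0_r (INR T)), <- fsum_const.
  apply fsum_ext. intros i Hi. pose proof (pos_INR i).
  replace (clip (INR n - INR n - INR i)) with 0 by (case_minmax; lra). ring.
Qed.

(** Telescoping [riemann] along the iterates [x_j]: the tail sum is dominated
    by [sum_j psi(x_j) (x_(j+1) - x_j)] once [x_J] passes [n + T]. *)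
Lemma tail_le_iterate_sum T J : INR n + INR T <= eta_iter psi (INR n) J ->
  fsum (fun i => psi (INR (n + 1 + i))) T <=
  fsum (fun j => psi (eta_iter psi (INR n) j) *
                 (eta_iter psi (INR n) (S j) - eta_iter psi (INR n) j)) J.
Proof.
  intros HJ. rewrite <- (riemann_full T _ HJ).
  replace (riemann T (eta_iter psi (INR n) J)) with
    (riemann T (eta_iter psi (INR n) J) - riemann T (eta_iter psi (INR n) O))
    by (simpl; rewrite riemann_start; ring).
  rewrite <- (fsum_telescope (fun j => riemann T (eta_iter psi (INR n) j))).
  apply fsum_le. intros j Hj.
  destruct (eta_iter_spec psi (INR n) HM Hn j) as [H1 _].
  pose proof (eta_gt psi (eta_iter psi (INR n) j) HM ltac:(lra)).
  apply riemann_increment; simpl; lra.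
Qed.

(** The iterates go to infinity, since [psi(x_j) = psi(n)/2^j -> 0]. *)
Lemma eta_iter_unbounded T : exists J, INR n + INR T <= eta_iter psi (INR n) J.
Proof.
  pose proof (psi_pos psi HM (INR n) Hn) as HP.
  assert (HT : 0 < psi (INR n + INR T)) by (apply psi_pos; auto; pose proof (pos_INR T); lra).
  destruct (exists_nat_ge (psi (INR n) / psi (INR n + INR T))) as [J HJ].
  exists J. destruct (eta_iter_spec psi (INR n) HM Hn J) as [H1 H2].
  destruct (Rle_dec (INR n + INR T) (eta_iter psi (INR n) J)) as [|Hlt]; auto. exfalso.
  assert (Hdec : psi (INR n + INR T) < psi (eta_iter psi (INR n) J)) by (apply psi_decr; auto; lra).
  rewrite H2 in Hdec.
  assert (HJ2 : INR J <= 2 ^ J).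
  { clear. induction J; [simpl; lra|]. rewrite S_INR. simpl.
    assert (1 <= 2 ^ J) by (apply pow_R1_Rle; lra). lra. }
  assert (0 < 2 ^ J) by (apply pow_lt; lra).
  assert (psi (INR n) <= 2 ^ J * psi (INR n + INR T)).
  { apply Rmult_le_reg_r with (/ psi (INR n + INR T)); [apply Rinv_0_lt_compat; lra|].
    rewrite Rmult_assoc, Rinv_r by lra. unfold Rdiv in HJ. lra. }
  apply Rmult_lt_compat_r with (r := 2 ^ J) in Hdec; auto. unfold Rdiv in Hdec.
  rewrite Rmult_assoc, Rinv_l in Hdec by lra. lra.
Qed.

Hypothesis Hmu : mu_monotone psi.

(** Monotonicity of [mu] at [n <= e]: [eta(e) - e <= e h / n]. *)
Lemma eta_gap_le e : INR n <= e ->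
  eta psi e - e <= e * (eta psi (INR n) - INR n) / INR n.
Proof.
  intros He.
  pose proof (eta_gt psi e HM ltac:(lra)). pose proof (eta_gt psi (INR n) HM Hn).
  specialize (Hmu (INR n) e Hn He). unfold mu in Hmu.
  set (h := eta psi (INR n) - INR n) in *.
  set (d := eta psi e - e) in *.
  assert (Hd : 0 < d) by (unfold d; lra). assert (Hh : 0 < h) by (unfold h; lra).
  apply Rmult_le_reg_r with (INR n); [lra|].
  unfold Rdiv. rewrite Rmult_assoc, Rinv_l, Rmult_1_r by lra.
  apply Rmult_le_reg_r with (/ (d * h)); [apply Rinv_0_lt_compat; nra|].
  replace (d * INR n * / (d * h)) with (INR n / h) by (field; lra).
  replace (e * h * / (d * h)) with (e / d) by (field; lra). lra.
Qed.

Lemma eta_iter_le j : eta_iter psi (INR n) j <=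
  INR n * (1 + (eta psi (INR n) - INR n) / INR n) ^ j.
Proof.
  pose proof (eta_gt psi (INR n) HM Hn) as Heta.
  set (h := eta psi (INR n) - INR n) in *.
  assert (Hh : 0 < h) by (unfold h; lra).
  assert (Hr : 0 <= 1 + h / INR n).
  { assert (0 <= h / INR n) by (apply Rmult_le_pos; [lra| left; apply Rinv_0_lt_compat; lra]). lra. }
  induction j; [simpl; lra|].
  destruct (eta_iter_spec psi (INR n) HM Hn j) as [H1 _].
  pose proof (eta_gap_le _ H1) as Hg. fold h in Hg. simpl eta_iter. simpl pow.
  set (e := eta_iter psi (INR n) j) in *.
  assert (Hq : eta psi e <= e * (1 + h / INR n)) by (unfold Rdiv in *; nra).
  apply Rle_trans with (1 := Hq).
  replace (INR n * ((1 + h / INR n) * (1 + h / INR n) ^ j)) with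
    (INR n * (1 + h / INR n) ^ j * (1 + h / INR n)) by ring.
  apply Rmult_le_compat_r; auto.
Qed.

Lemma eta_iter_gap_le j :
  eta_iter psi (INR n) (S j) - eta_iter psi (INR n) j <=
  (eta psi (INR n) - INR n) * (1 + (eta psi (INR n) - INR n) / INR n) ^ j.
Proof.
  destruct (eta_iter_spec psi (INR n) HM Hn j) as [H1 _].
  simpl eta_iter. eapply Rle_trans; [apply eta_gap_le; auto|].
  pose proof (eta_gt psi (INR n) HM Hn) as Heta. pose proof (eta_iter_le j) as Hle.
  simpl eta_iter in Hle.
  set (h := eta psi (INR n) - INR n) in *.
  assert (Hh : 0 < h) by (unfold h; lra).
  replace (h * (1 + h / INR n) ^ j) with (INR n * (1 + h / INR n) ^ j * h / INR n) by (field; lra).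
  unfold Rdiv. apply Rmult_le_compat_r; [left; apply Rinv_0_lt_compat; lra|].
  apply Rmult_le_compat_r; [lra| exact Hle].
Qed.

Lemma iterate_sum_geometric J :
  fsum (fun j => psi (eta_iter psi (INR n) j) *
                 (eta_iter psi (INR n) (S j) - eta_iter psi (INR n) j)) J <=
  psi (INR n) * (eta psi (INR n) - INR n) *
  fsum (fun j => ((1 + (eta psi (INR n) - INR n) / INR n) / 2) ^ j) J.
Proof.
  pose proof (psi_pos psi HM (INR n) Hn) as HP.
  pose proof (eta_gt psi (INR n) HM Hn) as Heta.
  rewrite <- fsum_scal. apply fsum_le. intros j Hj.
  destruct (eta_iter_spec psi (INR n) HM Hn j) as [_ H2]. rewrite H2.
  pose proof (eta_iter_gap_le j) as Hg.
  set (rho := 1 + (eta psi (INR n) - INR n) / INR n) in *.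
  assert (0 < 2 ^ j) by (apply pow_lt; lra).
  unfold Rdiv. rewrite Rpow_mult_distr, pow_inv.
  replace (psi (INR n) * (eta psi (INR n) - INR n) * (rho ^ j * / 2 ^ j)) with
    ((psi (INR n) * / 2 ^ j) * ((eta psi (INR n) - INR n) * rho ^ j)) by ring.
  apply Rmult_le_compat_l; auto.
  apply Rmult_le_pos; [lra| left; apply Rinv_0_lt_compat; lra].
Qed.

(** The tail sum estimate, for [mu(n) >= b > 2], i.e. [b h <= n]. *)
Lemma tail_sum_bound b : 2 < b -> b * (eta psi (INR n) - INR n) <= INR n -> forall T,
  fsum (fun i => psi (INR (n + i))) T <=
  psi (INR n) * (1 + 2 * b * (eta psi (INR n) - INR n) / (b - 1)).
Proof.
  intros Hb Hbh T.
  pose proof (psi_pos psi HM (INR n) Hn) as HP.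
  pose proof (eta_gt psi (INR n) HM Hn) as Heta.
  destruct (halved_ratio_bound b (eta psi (INR n) - INR n) (INR n) Hb ltac:(lra) ltac:(lra) Hbh)
    as [Hrho Hgeom].
  set (h := eta psi (INR n) - INR n) in *. assert (Hh : 0 < h) by (unfold h; lra).
  (* the first term is [psi n]; the others are compared with the iterates *)
  destruct T as [|T].
  { simpl. assert (0 <= 2 * b * h / (b - 1))
      by (apply Rmult_le_pos; [nra| left; apply Rinv_0_lt_compat; lra]). nra. }
  rewrite fsum_shift, Nat.add_0_r.
  replace (fsum (fun i => psi (INR (n + S i))) T) with (fsum (fun i => psi (INR (n + 1 + i))) T)
    by (apply fsum_ext; intros; do 2 f_equal; lia).
  destruct (eta_iter_unbounded T) as [J HJ].
  eapply Rle_trans; [apply Rplus_le_compat_l, (tail_le_iterate_sum T J HJ)|].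
  eapply Rle_trans; [apply Rplus_le_compat_l, iterate_sum_geometric|]. fold h.
  pose proof (fsum_geometric_le _ J Hrho).
  assert (psi (INR n) * h * fsum (fun j => ((1 + h / INR n) / 2) ^ j) J <=
          psi (INR n) * h * (2 * b / (b - 1))) by (apply Rmult_le_compat_l; nra).
  replace (psi (INR n) * (1 + 2 * b * h / (b - 1))) with
    (psi (INR n) + psi (INR n) * h * (2 * b / (b - 1))) by (field; lra).
  lra.
Qed.


(** Convexity: the slope of [psi] on [[n, n+1]] is at least the slope on [[x, n]]. *)
Lemma convex_first_difference x : 1 <= x < INR n ->
  (INR n - x) * (psi (INR n) - psi (INR n + 1)) <= psi x - psi (INR n).
Proof.
  intros Hx. destruct HM as [_ [_ [Hcv _]]].
  set (l := 1 / (INR n + 1 - x)).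
  assert (Hl : 0 <= l <= 1) by (unfold l; apply div_unit_interval; lra).
  pose proof (Hcv x (INR n + 1) l ltac:(lra) ltac:(lra) Hl) as Hc.
  replace (l * x + (1 - l) * (INR n + 1)) with (INR n) in Hc by (unfold l; field; lra).
  apply Rmult_le_compat_l with (r := INR n + 1 - x) in Hc; [|lra].
  replace ((INR n + 1 - x) * (l * psi x + (1 - l) * psi (INR n + 1))) with
    (psi x + (INR n - x) * psi (INR n + 1)) in Hc by (unfold l; field; lra).
  lra.
Qed.

(** At the point [x = n^2/(n+h)] (which is [>= 1] when [1 < h <= n/2])
    monotonicity of [mu] gives [mu(x) <= mu(n) = n/h], i.e. [eta(x) >= x + x h/n = n]. *)
Lemma eta_reaches_n : 1 < eta psi (INR n) - INR n -> 2 * (eta psi (INR n) - INR n) <= INR n ->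
  let x := INR n * INR n / eta psi (INR n) in 1 <= x /\ INR n <= eta psi x.
Proof.
  intros Hh1 H2h x. assert (Heta : 0 < eta psi (INR n)) by lra.
  set (h := eta psi (INR n) - INR n) in *. assert (Hh : 0 < h) by lra.
  assert (Ex : x * (INR n + h) = INR n * INR n) by (unfold x, h; field; lra).
  assert (INR n + h <= INR n * INR n) by nra.
  assert (Hx1 : 1 <= x) by nra.
  split; auto.
  pose proof (eta_gt psi x HM Hx1).
  assert (Hxn : x <= INR n) by nra.
  pose proof (Hmu x (INR n) Hx1 Hxn) as Hm. unfold mu in Hm. fold h in Hm.
  set (dx := eta psi x - x) in *. assert (Hdx : 0 < dx) by (unfold dx; lra).
  assert (Hxh : x * h <= INR n * dx).
  { apply Rmult_le_reg_r with (/ (dx * h)); [apply Rinv_0_lt_compat; nra|].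
    replace (x * h * / (dx * h)) with (x / dx) by (field; lra).
    replace (INR n * dx * / (dx * h)) with (INR n / h) by (field; lra). lra. }
  assert (INR n * INR n <= INR n * eta psi x) by (unfold dx in Hxh; nra).
  apply Rmult_le_reg_l with (INR n); lra.
Qed.

(** With [h = eta(n) - n] and [mu(n) >= b]: [psi(n) - psi(n+1) <= psi(n) (b+1)/(b h)],
    by convexity between [x = n^2/(n+h)] and [n], where [psi(x) <= 2 psi(n)]. *)
Lemma first_difference_bound b : 2 < b ->
  b * (eta psi (INR n) - INR n) <= INR n -> 1 < eta psi (INR n) - INR n ->
  psi (INR n) - psi (INR n + 1) <= psi (INR n) * (b + 1) / (b * (eta psi (INR n) - INR n)).
Proof.
  intros Hb Hbh Hh1.
  pose proof (psi_pos psi HM (INR n) Hn) as HP.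
  destruct (eta_reaches_n Hh1 ltac:(nra)) as [Hx1 Hetax].
  assert (Heta : 0 < eta psi (INR n)) by lra.
  set (x := INR n * INR n / eta psi (INR n)) in *.
  set (h := eta psi (INR n) - INR n) in *. assert (Hh : 0 < h) by lra.
  assert (Hnx : INR n - x = INR n * h / (INR n + h)) by (unfold x, h; field; lra).
  assert (Hxpos : 0 < INR n - x).
  { rewrite Hnx; apply Rmult_lt_0_compat; [nra| apply Rinv_0_lt_compat; lra]. }
  assert (Hpx : psi x <= 2 * psi (INR n)).
  { destruct (eta_spec psi x HM Hx1) as [_ Hsx].
    assert (psi (eta psi x) <= psi (INR n)) by (apply psi_decr_le; auto). lra. }
  assert (HD : (INR n - x) * (psi (INR n) - psi (INR n + 1)) <= psi (INR n))
    by (pose proof (convex_first_difference x ltac:(lra)); lra).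
  rewrite Hnx in HD.
  apply Rmult_le_reg_r with (INR n * h / (INR n + h)).
  { apply Rmult_lt_0_compat; [nra| apply Rinv_0_lt_compat; lra]. }
  rewrite Rmult_comm. apply Rle_trans with (1 := HD).
  replace (psi (INR n) * (b + 1) / (b * h) * (INR n * h / (INR n + h))) with
    (psi (INR n) * ((b + 1) * INR n / (b * (INR n + h)))) by (field; lra).
  rewrite <- (Rmult_1_r (psi (INR n))) at 1. apply Rmult_le_compat_l; [lra|].
  apply Rmult_le_reg_r with (b * (INR n + h)); [nra|].
  replace ((b + 1) * INR n / (b * (INR n + h)) * (b * (INR n + h))) with ((b + 1) * INR n)
    by (field; lra). nra.
Qed.

End MonotoneMu.

Lemma cv_const_zero : Un_cv (fun _ => 0) 0.
Proof. intros eps He. exists O. intros. unfold Rdist. rewrite Rminus_0_r, Rabs_R0. lra. Qed.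

Lemma cv_scal_zero (u : nat -> R) c : Un_cv u 0 -> Un_cv (fun k => c * u k) 0.
Proof.
  intros H. replace 0 with (c * 0) by ring.
  apply (CV_mult (fun _ => c) u); [intros eps He; exists O; intros; unfold Rdist|]; auto.
  rewrite Rminus_diag, Rabs_R0. lra.
Qed.

Section Comparison.

Variables (u p : nat -> R) (S0 : R).
Hypothesis Hup : forall i, Rabs (u i) <= p i.
Hypothesis Hbounded : forall T, fsum p T <= S0.

Lemma partial_sums_diff N M : (N <= M)%nat ->
  Rabs (sum_f_R0 u M - sum_f_R0 u N) <= sum_f_R0 p M - sum_f_R0 p N.
Proof.
  intros H. rewrite !sum_f_R0_fsum. replace (S M) with (S N + (M - N))%nat by lia.
  rewrite !fsum_split, !Rplus_minus_l.
  eapply Rle_trans; [apply fsum_abs| apply fsum_le; auto].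
Qed.

Lemma majorant_cv : {L | Un_cv (sum_f_R0 p) L}.
Proof.
  apply growing_cv.
  - intros N. simpl. pose proof (Rabs_pos (u (S N))). pose proof (Hup (S N)). lra.
  - exists S0. intros x [i Hi]. subst. rewrite sum_f_R0_fsum. auto.
Qed.

(** Comparison test: the partial sums of [u] are Cauchy. *)
Lemma series_exists : exists l, infinite_sum u l.
Proof.
  destruct majorant_cv as [L HL].
  assert (HC := CV_Cauchy _ (exist _ L HL)).
  assert (Hcrit : Cauchy_crit (sum_f_R0 u)).
  { intros eps He. destruct (HC eps He) as [N HN]. exists N. intros i j Hi Hj.
    unfold Rdist in *. destruct (le_lt_dec i j) as [Hij|Hij].
    - pose proof (partial_sums_diff i j Hij). specialize (HN j i Hj Hi).
      rewrite Rabs_minus_sym. pose proof (Rle_abs (sum_f_R0 p j - sum_f_R0 p i)). lra.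
    - pose proof (partial_sums_diff j i ltac:(lia)). specialize (HN i j Hi Hj).
      pose proof (Rle_abs (sum_f_R0 p i - sum_f_R0 p j)). lra. }
  destruct (Rcomplete.R_complete _ Hcrit) as [l Hl]. exists l. exact Hl.
Qed.

Lemma series_value_cv : Un_cv (sum_f_R0 u) (series_value u).
Proof. unfold series_value. apply epsilon_spec, series_exists. Qed.

Lemma series_value_bound : Rabs (series_value u) <= S0.
Proof.
  apply (lim_abs_le (sum_f_R0 u) (fun _ => 0)); [apply series_value_cv| apply cv_const_zero|].
  intros k. rewrite Rplus_0_r, sum_f_R0_fsum.
  eapply Rle_trans; [apply fsum_abs|]. eapply Rle_trans; [apply fsum_le; intros; apply Hup|]. auto.
Qed.

Lemma series_value_remainder L N : Un_cv (sum_f_R0 p) L ->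
  Rabs (series_value u - sum_f_R0 u N) <= L - sum_f_R0 p N.
Proof.
  intros HL.
  apply (lim_abs_le (fun k => sum_f_R0 u (N + k)%nat - sum_f_R0 u N)
                    (fun k => sum_f_R0 p (N + k)%nat - L)).
  - intros eps He. destruct (series_value_cv eps He) as [N0 HN]. exists N0. intros k Hk.
    unfold Rdist in *. replace (sum_f_R0 u (N + k) - sum_f_R0 u N - (series_value u - sum_f_R0 u N))
      with (sum_f_R0 u (N + k) - series_value u) by ring. apply HN. lia.
  - intros eps He. destruct (HL eps He) as [N0 HN]. exists N0. intros k Hk.
    unfold Rdist. rewrite Rminus_0_r. apply HN. lia.
  - intros k. pose proof (partial_sums_diff N (N + k) ltac:(lia)). lra.
Qed.

End Comparison.

Lemma series_continuous (u : R -> nat -> R) (p : nat -> R) S0 :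
  (forall t i, Rabs (u t i) <= p i) -> (forall T, fsum p T <= S0) ->
  (forall i x, continuity_pt (fun t => u t i) x) ->
  forall x, continuity_pt (fun t => series_value (u t)) x.
Proof.
  intros Hu HS Hc x.
  destruct (majorant_cv (u 0) p S0 (Hu 0) HS) as [L HL].
  apply (CVU_continuity (fun N t => sum_f_R0 (u t) N) (fun t => series_value (u t)) x
           (mkposreal 1 Rlt_0_1)).
  - intros eps He. destruct (HL eps He) as [N HN]. exists N. intros k y Hk _.
    pose proof (series_value_remainder (u y) p S0 (Hu y) HS L k HL).
    specialize (HN k Hk). unfold Rdist in HN. rewrite Rabs_minus_sym in HN.
    pose proof (Rle_abs (L - sum_f_R0 p k)). lra.
  - intros N y _. induction N; simpl; [apply Hc| apply continuity_pt_plus; auto].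
  - unfold Boule. simpl. rewrite Rminus_diag, Rabs_R0. lra.
Qed.

(** ** Summation by parts, twice *)

Lemma summation_by_parts2 (c G : nat -> R) N : c O = 0 -> c 1%nat = 0 ->
  fsum (fun j => c j * (G (S (S j)) - 2 * G (S j) + G j)) (S (S N)) =
  fsum (fun i => (c i - 2 * c (S i) + c (S (S i))) * G (S (S i))) N
  + (c N - c (S N)) * G (S (S N)) + c (S N) * (G (S (S (S N))) - G (S (S N))).
Proof.
  intros H0 H1. induction N.
  - simpl. rewrite H0, H1. ring.
  - change (fsum (fun j => c j * (G (S (S j)) - 2 * G (S j) + G j)) (S (S (S N)))) with
      (fsum (fun j => c j * (G (S (S j)) - 2 * G (S j) + G j)) (S (S N))
       + c (S (S N)) * (G (S (S (S (S N)))) - 2 * G (S (S (S N))) + G (S (S N)))).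
    rewrite IHN. simpl fsum. ring.
Qed.

Lemma summation_by_parts2_bound (c G : nat -> R) N Gamma :
  c O = 0 -> c 1%nat = 0 -> (forall j, Rabs (G j) <= Gamma) ->
  Rabs (fsum (fun j => c j * (G (S (S j)) - 2 * G (S j) + G j)) (S (S N))) <=
  Gamma * (fsum (fun i => Rabs (c i - 2 * c (S i) + c (S (S i)))) N
           + Rabs (c N - c (S N)) + 2 * Rabs (c (S N))).
Proof.
  intros H0 H1 HG. rewrite summation_by_parts2 by auto.
  assert (Hsum : Rabs (fsum (fun i => (c i - 2 * c (S i) + c (S (S i))) * G (S (S i))) N)
          <= Gamma * fsum (fun i => Rabs (c i - 2 * c (S i) + c (S (S i)))) N).
  { eapply Rle_trans; [apply fsum_abs|]. rewrite <- fsum_scal. apply fsum_le. intros i _.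
    rewrite Rabs_mult, (Rmult_comm Gamma). apply Rmult_le_compat_l; [apply Rabs_pos| apply HG]. }
  assert (Hb1 : Rabs ((c N - c (S N)) * G (S (S N))) <= Gamma * Rabs (c N - c (S N))).
  { rewrite Rabs_mult, (Rmult_comm Gamma). apply Rmult_le_compat_l; [apply Rabs_pos| apply HG]. }
  assert (Hb2 : Rabs (c (S N) * (G (S (S (S N))) - G (S (S N)))) <= Gamma * (2 * Rabs (c (S N)))).
  { rewrite Rabs_mult. pose proof (Rabs_pos (c (S N))).
    pose proof (Rabs_triang (G (S (S (S N)))) (- G (S (S N)))) as Ht. rewrite Rabs_Ropp in Ht.
    pose proof (HG (S (S (S N)))). pose proof (HG (S (S N))). unfold Rminus. nra. }
  pose proof (Rabs_triang (fsum (fun i => (c i - 2 * c (S i) + c (S (S i))) * G (S (S i))) N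
                           + (c N - c (S N)) * G (S (S N)))
                          (c (S N) * (G (S (S (S N))) - G (S (S N))))).
  pose proof (Rabs_triang (fsum (fun i => (c i - 2 * c (S i) + c (S (S i))) * G (S (S i))) N)
                          ((c N - c (S N)) * G (S (S N)))).
  lra.
Qed.

Lemma cos_second_difference x t : sin (t / 2) <> 0 ->
  cos x = - cos (x + t) / (4 * sin (t / 2) ^ 2) - 2 * (- cos x / (4 * sin (t / 2) ^ 2))
          + - cos (x - t) / (4 * sin (t / 2) ^ 2).
Proof.
  intros Hs. rewrite cos_plus, cos_minus.
  set (u := t / 2) in *. replace t with (2 * u) by (unfold u; field).
  rewrite cos_2a_sin, sin_2a. field. auto.
Qed.

Definition cos_second_primitive (k0 th t : R) (j : nat) : R :=
  - cos ((k0 + INR j - 1) * t - th) / (4 * sin (t / 2) ^ 2).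

Lemma cos_second_primitive_diff k0 th t j : sin (t / 2) <> 0 ->
  cos ((k0 + INR j) * t - th) =
  cos_second_primitive k0 th t (S (S j)) - 2 * cos_second_primitive k0 th t (S j)
  + cos_second_primitive k0 th t j.
Proof.
  intros Hs. unfold cos_second_primitive.
  rewrite (cos_second_difference ((k0 + INR j) * t - th) t Hs), !S_INR.
  replace ((k0 + INR j) * t - th + t) with ((k0 + (INR j + 1 + 1) - 1) * t - th) by ring.
  replace ((k0 + INR j) * t - th - t) with ((k0 + INR j - 1) * t - th) by ring.
  replace (k0 + (INR j + 1) - 1) with (k0 + INR j) by ring. reflexivity.
Qed.

Lemma cos_second_primitive_bound k0 th t j : sin (t / 2) <> 0 ->
  Rabs (cos_second_primitive k0 th t j) <= / (4 * sin (t / 2) ^ 2).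
Proof.
  intros Hs. assert (Hs2 : 0 < sin (t / 2) ^ 2) by (rewrite <- Rsqr_pow2; apply Rsqr_pos_lt; auto).
  unfold cos_second_primitive, Rdiv.
  rewrite Rabs_mult, Rabs_Ropp, (Rabs_pos_eq (/ _)) by (left; apply Rinv_0_lt_compat; lra).
  pose proof (COS_bound ((k0 + INR j - 1) * t - th)).
  assert (Rabs (cos ((k0 + INR j - 1) * t - th)) <= 1) by (apply Rabs_le; lra).
  rewrite <- (Rmult_1_l (/ _)) at 2.
  apply Rmult_le_compat_r; [left; apply Rinv_0_lt_compat; lra| lra].
Qed.

(** ** Psi* as a cosine series with a ramp-then-tail coefficient sequence *)

Definition ramp_length (psi : R -> R) (n : nat) : nat :=
  Z.to_nat (Int_part (eta psi (INR n)) - Z.of_nat n).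

Lemma ramp_length_spec psi n : 1 < eta psi (INR n) - INR n ->
  (1 <= ramp_length psi n)%nat /\
  INR (ramp_length psi n) = ipart (eta psi (INR n)) - INR n /\
  Z.of_nat (ramp_length psi n) = (Int_part (eta psi (INR n)) - Z.of_nat n)%Z /\
  INR (ramp_length psi n) <= eta psi (INR n) - INR n /\
  eta psi (INR n) - INR n - 1 < INR (ramp_length psi n).
Proof.
  intros Hh. unfold ramp_length, ipart. set (I := Int_part (eta psi (INR n))).
  destruct (base_Int_part (eta psi (INR n))) as [H1 H2]. fold I in H1, H2.
  assert (HI : (Z.of_nat n < I)%Z) by (apply lt_IZR; rewrite <- INR_IZR_INZ; lra).
  assert (HZ : Z.of_nat (Z.to_nat (I - Z.of_nat n)) = (I - Z.of_nat n)%Z) by (apply Z2Nat.id; lia).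
  assert (HR : INR (Z.to_nat (I - Z.of_nat n)) = IZR I - INR n).
  { rewrite INR_IZR_INZ, HZ, minus_IZR, <- INR_IZR_INZ. ring. }
  split; [lia|]. split; [auto|]. split; [auto|]. rewrite HR. lra.
Qed.

(** The ramp part of Psi*, reindexed over [i < m - 1] (frequency [n-m+1+i]). *)
Definition ramp_sum psi beta n t : R :=
  fsum (fun i => (INR i + 1) / INR (ramp_length psi n) *
      cos ((INR n - INR (ramp_length psi n) + 1 + INR i) * t - beta * PI / 2))
    (ramp_length psi n - 1).

Lemma PsiStar_ramp_tail psi beta n t : 1 < eta psi (INR n) - INR n ->
  PsiStar psi beta n t =
  psi (INR n) * ramp_sum psi beta n t + series_value (tail_term psi beta n t).
Proof.
  intros Hh. destruct (ramp_length_spec psi n Hh) as [Hm1 [HmR [HmZ _]]].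
  set (m := ramp_length psi n) in *.
  unfold PsiStar, sumZ, ramp_sum. f_equal. f_equal. fold m.
  rewrite fold_right_fsum.
  replace (Z.to_nat (Z.of_nat n - 1 - (2 * Z.of_nat n - Int_part (eta psi (INR n)) + 1) + 1))
    with (m - 1)%nat by lia.
  apply fsum_ext. intros i Hi. rewrite <- HmR.
  assert (E : IZR (2 * Z.of_nat n - Int_part (eta psi (INR n)) + 1 + Z.of_nat i) =
              INR n - INR m + 1 + INR i).
  { rewrite !plus_IZR, minus_IZR, mult_IZR, <- !INR_IZR_INZ.
    replace (IZR (Int_part (eta psi (INR n)))) with (INR n + INR m)
      by (rewrite HmR; unfold ipart; ring).
    simpl IZR. ring. }
  rewrite E. f_equal. assert (0 < INR m) by (apply lt_0_INR; lia). field. lra.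
Qed.

(** The coefficient of frequency [n - m - 1 + j] in Psi*: [0, 0], then the
    ramp [psi(n) (j-1)/m] up to [j = m], then [psi(n), psi(n+1), ...]. *)
Definition coef psi n (j : nat) : R :=
  if (j <=? ramp_length psi n)%nat then psi (INR n) * INR (j - 1) / INR (ramp_length psi n)
  else psi (INR (n + (j - S (ramp_length psi n)))).

Lemma coef_ramp psi n j : (1 <= ramp_length psi n)%nat -> (j <= S (ramp_length psi n))%nat ->
  coef psi n j = psi (INR n) / INR (ramp_length psi n) * INR (j - 1).
Proof.
  intros Hm Hj. unfold coef. assert (0 < INR (ramp_length psi n)) by (apply lt_0_INR; lia).
  destruct (Nat.leb_spec j (ramp_length psi n)); [field; lra|].
  assert (j = S (ramp_length psi n)) by lia. subst.
  rewrite Nat.sub_diag, Nat.add_0_r, Nat.sub_succ, Nat.sub_0_r. field; lra.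
Qed.

Lemma coef_tail psi n j : (S (ramp_length psi n) <= j)%nat ->
  coef psi n j = psi (INR (n + (j - S (ramp_length psi n)))).
Proof. intros Hj. unfold coef. destruct (Nat.leb_spec j (ramp_length psi n)); [lia| auto]. Qed.

Lemma coef_partial_sum psi beta n t M : (1 <= ramp_length psi n)%nat ->
  fsum (fun j => coef psi n j *
          cos ((INR n - INR (ramp_length psi n) - 1 + INR j) * t - beta * PI / 2))
       (S (ramp_length psi n) + M)
  = psi (INR n) * ramp_sum psi beta n t + fsum (tail_term psi beta n t) M.
Proof.
  intros Hm. set (m := ramp_length psi n) in *. rewrite fsum_split. f_equal.
  - replace (S m) with (2 + (m - 1))%nat by lia. rewrite fsum_split.
    unfold ramp_sum. fold m. rewrite <- fsum_scal.
    replace (fsum (fun j => coef psi n j * cos ((INR n - INR m - 1 + INR j) * t - beta * PI / 2)) 2)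
      with 0 by (simpl fsum; rewrite !coef_ramp by lia; simpl INR; ring).
    rewrite Rplus_0_l. apply fsum_ext. intros i Hi. rewrite coef_ramp by lia. fold m.
    replace (2 + i - 1)%nat with (S i) by lia. rewrite S_INR.
    replace (INR n - INR m - 1 + INR (2 + i)) with (INR n - INR m + 1 + INR i)
      by (rewrite plus_INR; simpl; ring).
    assert (0 < INR m) by (apply lt_0_INR; lia). field. lra.
  - apply fsum_ext. intros i Hi. rewrite coef_tail by lia. fold m. unfold tail_term.
    replace (S m + i - S m)%nat with i by lia.
    replace (INR n - INR m - 1 + INR (S m + i)) with (INR (n + i))
      by (rewrite !plus_INR, S_INR; ring).
    reflexivity.
Qed.

Section Kernel.

Variables (psi : R -> R) (beta : R) (n : nat).
Hypothesis HM : in_M psi.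
Hypothesis Hn : 1 <= INR n.

Lemma psi_tail_pos i : 0 < psi (INR (n + i)).
Proof. apply psi_pos; auto. rewrite plus_INR. pose proof (pos_INR i). lra. Qed.

Lemma psi_tail_to_zero : Un_cv (fun k => psi (INR (n + k))) 0.
Proof.
  destruct HM as [_ [_ [_ Hl]]]. intros eps He. destruct (Hl eps He) as [T HT].
  destruct (exists_nat_ge T) as [N HN]. exists N. intros k Hk. unfold Rdist. rewrite Rminus_0_r.
  apply HT. apply Rle_trans with (1 := HN). apply le_INR. lia.
Qed.

Lemma tail_term_abs t i : Rabs (tail_term psi beta n t i) <= psi (INR (n + i)).
Proof.
  unfold tail_term. rewrite Rabs_mult. pose proof (psi_tail_pos i).
  rewrite (Rabs_pos_eq (psi _)) by lra.
  pose proof (COS_bound (INR (n + i) * t - beta * PI / 2)).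
  assert (Rabs (cos (INR (n + i) * t - beta * PI / 2)) <= 1) by (apply Rabs_le; lra). nra.
Qed.

Lemma convex_second_difference k : 1 <= k -> psi (k + 1) <= (psi k + psi (k + 2)) / 2.
Proof.
  destruct HM as [_ [_ [Hcv _]]]. intros Hk.
  pose proof (Hcv k (k + 2) (1 / 2) Hk ltac:(lra) ltac:(lra)) as H.
  replace (1 / 2 * k + (1 - 1 / 2) * (k + 2)) with (k + 1) in H by field. lra.
Qed.

Hypothesis Hm : (1 <= ramp_length psi n)%nat.

Definition coef_variation (i : nat) : R :=
  Rabs (coef psi n i - 2 * coef psi n (S i) + coef psi n (S (S i))).

Lemma ramp_slope_nonneg : 0 <= psi (INR n) / INR (ramp_length psi n).
Proof.
  apply Rmult_le_pos; [pose proof (psi_pos psi HM _ Hn); lra|].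
  left; apply Rinv_0_lt_compat, lt_0_INR; lia.
Qed.

(** On the ramp only the foot [i = 0] has a nonzero second difference. *)
Lemma coef_variation_ramp :
  fsum coef_variation (ramp_length psi n) = psi (INR n) / INR (ramp_length psi n).
Proof.
  pose proof ramp_slope_nonneg.
  set (m := ramp_length psi n) in *. set (s := psi (INR n) / INR m) in *.
  replace m with (S (m - 1)) by lia. rewrite fsum_shift.
  replace (fsum (fun i => coef_variation (S i)) (m - 1)) with 0.
  - unfold coef_variation. rewrite !coef_ramp by (fold m; lia). simpl INR. fold m s.
    replace (s * 0 - 2 * (s * 0) + s * 1) with s by ring.
    rewrite Rabs_pos_eq; lra.
  - rewrite <- (Rmult_0_r (INR (m - 1))), <- fsum_const. apply fsum_ext.
    intros i Hi. unfold coef_variation. rewrite !coef_ramp by (fold m; lia). fold m s.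
    replace (S i - 1)%nat with i by lia. replace (S (S i) - 1)%nat with (S i) by lia.
    replace (S (S (S i)) - 1)%nat with (S (S i)) by lia. rewrite !S_INR.
    replace (s * INR i - 2 * (s * (INR i + 1)) + s * (INR i + 1 + 1)) with 0 by ring.
    symmetry. apply Rabs_R0.
Qed.

(** At the top of the ramp the slope drops from [psi(n)/m] to [psi(n+1) - psi(n)]. *)
Lemma coef_variation_top :
  coef_variation (ramp_length psi n) =
  psi (INR n) / INR (ramp_length psi n) + (psi (INR n) - psi (INR n + 1)).
Proof.
  pose proof ramp_slope_nonneg.
  assert (HD : psi (INR n + 1) <= psi (INR n)) by (apply psi_decr_le; auto; lra).
  set (m := ramp_length psi n) in *. set (s := psi (INR n) / INR m) in *.
  assert (Hmpos : 0 < INR m) by (apply lt_0_INR; lia).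
  assert (Hsm : s * INR m = psi (INR n)) by (unfold s; field; lra).
  unfold coef_variation. rewrite (coef_ramp psi n m), (coef_ramp psi n (S m)) by (fold m; lia).
  rewrite (coef_tail psi n (S (S m))) by (fold m; lia). fold m s.
  replace (S (S m) - S m)%nat with 1%nat by lia. rewrite Nat.sub_succ, Nat.sub_0_r.
  rewrite plus_INR, minus_INR by lia. simpl (INR 1).
  rewrite Rabs_left1; [ring_simplify; rewrite Hsm; ring|].
  replace (s * (INR m - 1) - 2 * psi (INR n) + psi (INR n + 1)) with
    (- s - (psi (INR n) - psi (INR n + 1))) by (rewrite <- Hsm; ring).
  lra.
Qed.

(** On the tail the second differences are nonnegative by convexity and
    telescope to at most [psi(n) - psi(n+1)]. *)
Lemma coef_variation_tail N :
  fsum (fun i => coef_variation (S (ramp_length psi n) + i)) N <= psi (INR n) - psi (INR n + 1).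
Proof.
  set (m := ramp_length psi n) in *.
  set (g := fun i => psi (INR (n + S i)) - psi (INR (n + i))).
  apply Rle_trans with (fsum (fun i => g (S i) - g i) N).
  - apply fsum_le. intros i Hi. unfold coef_variation, g.
    rewrite !(coef_tail psi n) by (fold m; lia). fold m.
    replace (S m + i - S m)%nat with i by lia.
    replace (S (S m + i) - S m)%nat with (S i) by lia.
    replace (S (S (S m + i)) - S m)%nat with (S (S i)) by lia.
    assert (Hk : 1 <= INR (n + i)) by (rewrite plus_INR; pose proof (pos_INR i); lra).
    pose proof (convex_second_difference (INR (n + i)) Hk) as Hc.
    replace (INR (n + i) + 1) with (INR (n + S i)) in Hc by (rewrite !plus_INR, S_INR; ring).
    replace (INR (n + i) + 2) with (INR (n + S (S i))) in Hc by (rewrite !plus_INR, !S_INR; ring).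
    rewrite Rabs_pos_eq by lra. lra.
  - rewrite fsum_telescope. unfold g. rewrite Nat.add_0_r.
    replace (INR (n + 1)) with (INR n + 1) by (rewrite plus_INR; simpl; ring).
    assert (psi (INR (n + S N)) <= psi (INR (n + N))).
    { apply psi_decr_le; auto; [rewrite plus_INR; pose proof (pos_INR N); lra|].
      apply le_INR; lia. }
    lra.
Qed.

Definition second_variation : R :=
  2 * (psi (INR n) / INR (ramp_length psi n)) + 2 * (psi (INR n) - psi (INR n + 1)).

Lemma coef_second_difference_sum N : fsum coef_variation N <= second_variation.
Proof.
  apply Rle_trans with (fsum coef_variation (S (ramp_length psi n) + N)).
  { apply fsum_mono; [lia| intros; apply Rabs_pos]. }
  rewrite fsum_split.
  change (fsum coef_variation (S (ramp_length psi n))) with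
    (fsum coef_variation (ramp_length psi n) + coef_variation (ramp_length psi n)).
  rewrite coef_variation_ramp, coef_variation_top.
  pose proof (coef_variation_tail N). unfold second_variation. lra.
Qed.

End Kernel.

Section Estimates.

Variables (psi : R -> R) (beta : R) (n : nat) (b : R).
Hypothesis HM : in_M psi.
Hypothesis Hmu : mu_monotone psi.
Hypothesis Hn : 1 <= INR n.
Hypothesis Hb : 2 < b.
Hypothesis Hbh : b * (eta psi (INR n) - INR n) <= INR n.
Hypothesis Hh1 : 1 < eta psi (INR n) - INR n.

Definition tail_majorant : R := psi (INR n) * (1 + 2 * b * (eta psi (INR n) - INR n) / (b - 1)).

Lemma tail_majorant_bound : forall T, fsum (fun i => psi (INR (n + i))) T <= tail_majorant.
Proof. intros T. apply tail_sum_bound; auto. Qed.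

(** Summation by parts on a partial sum: with [G_j = - cos((n-m-2+j) t - beta pi/2) /
    (4 sin^2(t/2))], the coefficient series reads [sum_j coef_j Delta^2 G_j]. *)
Lemma kernel_partial_sum_bound t k : sin (t / 2) <> 0 ->
  Rabs (psi (INR n) * ramp_sum psi beta n t + fsum (tail_term psi beta n t) (S (S k))) <=
  / (4 * sin (t / 2) ^ 2) * second_variation psi n + 2 * / (4 * sin (t / 2) ^ 2) * psi (INR (n + k)).
Proof.
  intros Hs. destruct (ramp_length_spec psi n Hh1) as [Hm1 _].
  set (m := ramp_length psi n) in *.
  assert (Hs2 : 0 < sin (t / 2) ^ 2) by (rewrite <- Rsqr_pow2; apply Rsqr_pos_lt; auto).
  set (Gamma := / (4 * sin (t / 2) ^ 2)).
  assert (HGa : 0 < Gamma) by (unfold Gamma; apply Rinv_0_lt_compat; lra).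
  set (G := cos_second_primitive (INR n - INR m - 1) (beta * PI / 2) t).
  rewrite <- coef_partial_sum by auto. fold m.
  replace (S m + S (S k))%nat with (S (S (S m + k))) by lia.
  rewrite (fsum_ext _ (fun j => coef psi n j * (G (S (S j)) - 2 * G (S j) + G j)))
    by (intros i _; unfold G; rewrite <- cos_second_primitive_diff; auto).
  eapply Rle_trans.
  { apply summation_by_parts2_bound; [| |intros; apply cos_second_primitive_bound; auto];
      rewrite coef_ramp by (fold m; lia); simpl; ring. }
  rewrite !coef_tail by (fold m; lia). fold m.
  replace (S m + k - S m)%nat with k by lia. replace (S (S m + k) - S m)%nat with (S k) by lia.
  pose proof (coef_second_difference_sum psi n HM Hn Hm1 (S m + k)) as Hvar.
  unfold coef_variation in Hvar.
  pose proof (psi_tail_pos psi n HM Hn (S k)).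
  assert (psi (INR (n + S k)) <= psi (INR (n + k))).
  { apply psi_decr_le; auto; [rewrite plus_INR; pose proof (pos_INR k); lra| apply le_INR; lia]. }
  rewrite (Rabs_pos_eq (psi (INR (n + S k)))), (Rabs_pos_eq (_ - _)) by lra.
  replace (Gamma * second_variation psi n + 2 * Gamma * psi (INR (n + k))) with
    (Gamma * (second_variation psi n + 2 * psi (INR (n + k)))) by ring.
  apply Rmult_le_compat_l; lra.
Qed.

Lemma kernel_abel_bound t : sin (t / 2) <> 0 ->
  Rabs (PsiStar psi beta n t) <= second_variation psi n / (4 * sin (t / 2) ^ 2).
Proof.
  intros Hs. rewrite PsiStar_ramp_tail by auto.
  set (Gamma := / (4 * sin (t / 2) ^ 2)).
  replace (second_variation psi n / (4 * sin (t / 2) ^ 2)) with (Gamma * second_variation psi n)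
    by (unfold Gamma, Rdiv; ring).
  apply (lim_abs_le
           (fun k => psi (INR n) * ramp_sum psi beta n t + sum_f_R0 (tail_term psi beta n t) (S k))
           (fun k => 2 * Gamma * psi (INR (n + k)))).
  - apply CV_plus with (An := fun _ => psi (INR n) * ramp_sum psi beta n t);
      [intros eps He; exists O; intros; unfold Rdist; rewrite Rminus_diag, Rabs_R0; lra|].
    intros eps He.
    destruct (series_value_cv _ _ _ (tail_term_abs psi beta n HM Hn t) tail_majorant_bound eps He) as [N HN].
    exists N. intros k Hk. apply HN. lia.
  - apply cv_scal_zero, psi_tail_to_zero; auto.
  - intros k. rewrite sum_f_R0_fsum. apply kernel_partial_sum_bound; auto.
Qed.

(** Crude bound: the ramp has [m - 1] terms of size at most [i/m], and the
    tail is bounded by [tail_majorant]. *)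
Lemma kernel_sup_bound t :
  Rabs (PsiStar psi beta n t) <=
  psi (INR n) * (INR (ramp_length psi n) - 1) / 2 + tail_majorant.
Proof.
  destruct (ramp_length_spec psi n Hh1) as [Hm1 _].
  set (m := ramp_length psi n) in *.
  rewrite PsiStar_ramp_tail by auto. eapply Rle_trans; [apply Rabs_triang|].
  pose proof (psi_pos psi HM _ Hn) as HP.
  apply Rplus_le_compat.
  - rewrite Rabs_mult, Rabs_pos_eq by lra. unfold Rdiv at 1. rewrite Rmult_assoc.
    apply Rmult_le_compat_l; [lra|].
    unfold ramp_sum. fold m. eapply Rle_trans; [apply fsum_abs|].
    assert (Hmp : 0 < INR m) by (apply lt_0_INR; lia).
    apply Rle_trans with (fsum (fun i => / INR m * (INR i + 1)) (m - 1)).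
    + apply fsum_le. intros i _. rewrite Rabs_mult.
      assert (0 <= (INR i + 1) / INR m)
        by (apply Rmult_le_pos; [pose proof (pos_INR i); lra| left; apply Rinv_0_lt_compat; lra]).
      rewrite (Rabs_pos_eq ((INR i + 1) / _)) by auto.
      pose proof (COS_bound ((INR n - INR m + 1 + INR i) * t - beta * PI / 2)).
      assert (Rabs (cos ((INR n - INR m + 1 + INR i) * t - beta * PI / 2)) <= 1)
        by (apply Rabs_le; lra).
      unfold Rdiv in *. nra.
    + rewrite fsum_scal, fsum_linear, minus_INR by lia. simpl (INR 1). right. field. lra.
  - apply (series_value_bound _ (fun i => psi (INR (n + i)))).
    + apply tail_term_abs; auto.
    + apply tail_majorant_bound.
Qed.

End Estimates.

Lemma PI_bounds : 3.135 <= PI <= 3.1421.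
Proof.
  destruct (PI_2_3_7_ineq 1) as [_ H1]. destruct (PI_2_3_7_ineq 0) as [H2 _].
  unfold tg_alt, PI_2_3_7_tg, Ratan_seq in *. simpl in *. split; lra.
Qed.

(** Jordan-type inequality [sin x >= 0.63 x] on [[0, PI/2]], from the
    degree-7 Taylor lower bound of [sin]. *)
Lemma sin_linear_lower x : 0 <= x <= PI / 2 -> 63 / 100 * x <= sin x.
Proof.
  intros Hx. pose proof PI_bounds as HPI.
  destruct (SIN x ltac:(lra) ltac:(lra)) as [H _].
  assert (E : sin_lb x = (-1)^0 * (x^1 / INR (fact 1)) + (-1)^1 * (x^3 / INR (fact 3)) +
     (-1)^2 * (x^5 / INR (fact 5)) + (-1)^3 * (x^7 / INR (fact 7))) by reflexivity.
  assert (F1 : INR (fact 1) = 1) by reflexivity.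
  assert (F3 : INR (fact 3) = 6) by (rewrite INR_IZR_INZ; reflexivity).
  assert (F5 : INR (fact 5) = 120) by (rewrite INR_IZR_INZ; reflexivity).
  assert (F7 : INR (fact 7) = 5040) by (rewrite INR_IZR_INZ; reflexivity).
  rewrite E, F1, F3, F5, F7 in H. simpl pow in H.
  set (y := x * x).
  assert (Hy : 0 <= y <= 2.47) by (unfold y; split; nra).
  assert (Hp : 0 <= 37/100 - y / 6 + y * y / 120 - y * y * y / 5040).
  { assert (0 <= (2.47 - y) * y) by nra. assert (0 <= (2.47 - y) * y * y) by nra. nra. }
  assert (0 <= x * (37/100 - y / 6 + y * y / 120 - y * y * y / 5040)) by nra.
  unfold y in *. nra.
Qed.

Lemma sin_half_sq_lower t : 0 < Rabs t <= PI -> 3969 / 40000 * t ^ 2 <= sin (t / 2) ^ 2.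
Proof.
  intros Ht. pose proof (sin_linear_lower (Rabs t / 2) ltac:(lra)).
  assert (E : sin (t / 2) ^ 2 = sin (Rabs t / 2) ^ 2).
  { destruct (Rle_dec 0 t); [rewrite Rabs_pos_eq; auto|].
    rewrite Rabs_left by lra. replace (- t / 2) with (- (t / 2)) by field. rewrite sin_neg. ring. }
  rewrite E. replace (t ^ 2) with (Rabs t ^ 2) by (rewrite <- Rsqr_pow2, <- Rsqr_pow2; symmetry; apply Rsqr_abs).
  nra.
Qed.


(** Psi* is continuous: a finite trigonometric sum plus a uniformly dominated series. *)
Lemma list_sum_continuous (l : list nat) (g : nat -> R -> R) x :
  (forall i, continuity_pt (g i) x) ->
  continuity_pt (fun t => fold_right Rplus 0 (map (fun i => g i t) l)) x.
Proof.
  intros Hg. induction l; simpl; [apply continuity_pt_const; intros ? ?; auto|].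
  apply continuity_pt_plus; auto.
Qed.

Lemma PsiStar_continuous psi beta n b x : in_M psi -> mu_monotone psi -> 1 <= INR n -> 2 < b ->
  b * (eta psi (INR n) - INR n) <= INR n -> continuity_pt (PsiStar psi beta n) x.
Proof.
  intros HM Hmu Hn Hb Hbh. unfold PsiStar. apply continuity_pt_plus.
  - apply continuity_pt_mult; [apply continuity_pt_const; intros ? ?; auto|].
    unfold sumZ. apply list_sum_continuous. intros i. reg.
  - apply (series_continuous (fun t => tail_term psi beta n t) (fun i => psi (INR (n + i)))
             (tail_majorant psi n b)).
    + intros t. apply tail_term_abs; auto.
    + apply tail_majorant_bound; auto.
    + intros i y. unfold tail_term. reg.
Qed.

Lemma Rpower_le_base r q : 0 < r <= 1 -> 1 <= q -> Rpower r q <= r.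
Proof.
  intros Hr Hq. unfold Rpower. rewrite <- (exp_ln r) at 2 by lra.
  assert (ln r <= 0).
  { destruct (Req_dec r 1) as [->|]; [rewrite ln_1; lra|].
    rewrite <- ln_1. left; apply ln_increasing; lra. }
  destruct (Req_dec (q * ln r) (ln r)) as [E|E]; [rewrite E; lra|].
  left; apply exp_increasing. nra.
Qed.

Lemma rpow_nonneg y q : 0 <= rpow y q.
Proof. unfold rpow. destruct (Rle_dec y 0); [lra| left; apply exp_pos]. Qed.

Lemma rpow_le_compat x y p : 0 <= p -> x <= y -> rpow x p <= rpow y p.
Proof.
  intros Hp Hxy. unfold rpow at 1. destruct (Rle_dec x 0); [apply rpow_nonneg|].
  unfold rpow. destruct (Rle_dec y 0); [lra| apply Rle_Rpower_l; lra].
Qed.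

Lemma rpow_interpolate y X z q : 0 <= y -> 0 < X -> y <= X -> y <= X * z -> 1 <= q ->
  rpow y q <= Rpower X q * z.
Proof.
  intros Hy HX Hyx Hyz Hq. unfold rpow. destruct (Rle_dec y 0).
  - assert (0 <= z) by (assert (y = 0) by lra; subst; nra).
    apply Rmult_le_pos; auto. left; apply exp_pos.
  - assert (Hr : 0 < y / X <= 1).
    { split; [apply Rmult_lt_0_compat; [lra| apply Rinv_0_lt_compat; lra]|].
      apply Rmult_le_reg_r with X; auto. unfold Rdiv; rewrite Rmult_assoc, Rinv_l; lra. }
    assert (y / X <= z).
    { apply Rmult_le_reg_r with X; auto. unfold Rdiv; rewrite Rmult_assoc, Rinv_l; lra. }
    replace y with (X * (y / X)) at 1 by (field; lra).
    rewrite <- Rpower_mult_distr by lra.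
    pose proof (Rpower_le_base _ _ Hr Hq).
    apply Rmult_le_compat_l; [left; apply exp_pos| lra].
Qed.

Lemma rpow_continuous q : 1 <= q -> forall y0, continuity_pt (fun y => rpow y q) y0.
Proof.
  intros Hq y0. destruct (Rtotal_order y0 0) as [Hneg|[H0|Hpos]].
  - apply (continuity_pt_locally_ext (fun _ => 0) _ (- y0)); [lra| |].
    + intros y Hy. unfold Rdist in Hy. unfold rpow. destruct (Rle_dec y 0); auto.
      exfalso. unfold Rabs in Hy; destruct (Rcase_abs (y - y0)); lra.
    + apply continuity_pt_const. intros ? ?; auto.
  - (* at 0, [0 <= y^q <= y] for [0 < y <= 1] *)
    subst. intros eps He. exists (Rmin 1 eps). split; [apply Rmin_pos; lra|].
    intros y [_ Hy]. simpl in *. unfold Rdist in *. rewrite Rminus_0_r in Hy.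
    unfold rpow at 2. destruct (Rle_dec 0 0) as [_|]; [|lra]. rewrite Rminus_0_r.
    unfold rpow. destruct (Rle_dec y 0); [rewrite Rabs_R0; lra|].
    assert (Hy1 : y < 1) by (pose proof (Rmin_l 1 eps); pose proof (Rle_abs y); lra).
    assert (Hy2 : y < eps) by (pose proof (Rmin_r 1 eps); pose proof (Rle_abs y); lra).
    pose proof (Rpower_le_base y q ltac:(lra) Hq).
    rewrite Rabs_pos_eq; [lra| left; apply exp_pos].
  - apply (continuity_pt_locally_ext (fun y => exp (q * ln y)) _ (y0 / 2)); [lra| |].
    + intros y Hy. unfold Rdist in Hy. unfold rpow. destruct (Rle_dec y 0); [|reflexivity].
      exfalso. unfold Rabs in Hy; destruct (Rcase_abs (y - y0)); lra.
    + apply (continuity_pt_comp (fun y => q * ln y) exp).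
      * apply continuity_pt_mult; [apply continuity_pt_const; intros ? ?; auto|].
        apply derivable_continuous_pt. exists (/ y0). apply derivable_pt_lim_ln; auto.
      * apply derivable_continuous_pt, derivable_pt_exp.
Qed.


(** The weight [W h t = (1 + h t)^-2 + (1 + h (2 PI - t))^-2] combines (i) and
    (ii) on [[0, 2 PI]]; its integral is at most [2/h]. *)
Definition weight (h t : R) : R := 1 / (1 + h * t) ^ 2 + 1 / (1 + h * (2 * PI - t)) ^ 2.

Lemma min_inverse_square_le X x y : 0 < X -> 0 < x -> y <= X ->
  y <= X * (20000 / 3969) / x ^ 2 -> y <= X * (169 / 16) / (1 + x) ^ 2.
Proof.
  intros HX Hx H1 H2. assert (Hx2 : 0 < x ^ 2) by (apply pow_lt; lra).
  assert (H1x : 0 < (1 + x) ^ 2) by (apply pow_lt; lra).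
  apply Rmult_le_reg_r with ((1 + x) ^ 2); auto.
  replace (X * (169 / 16) / (1 + x) ^ 2 * (1 + x) ^ 2) with (X * (169 / 16)) by (field; lra).
  destruct (Rle_dec x (9 / 4)).
  - assert ((1 + x) ^ 2 <= 169 / 16) by (simpl; nra).
    destruct (Rle_dec 0 y); nra.
  - assert (y * x ^ 2 <= X * (20000 / 3969)).
    { apply Rmult_le_compat_r with (r := x ^ 2) in H2; [|lra].
      replace (X * (20000 / 3969) / x ^ 2 * x ^ 2) with (X * (20000 / 3969)) in H2
        by (field; lra). auto. }
    assert (20000 / 3969 * (1 + x) ^ 2 <= 169 / 16 * x ^ 2) by (simpl; nra).
    destruct (Rle_dec 0 y); [|nra].
    assert (y * (1 + x) ^ 2 * (20000 / 3969) <= y * (169 / 16) * x ^ 2) by nra.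
    nra.
Qed.

Lemma weight_integral (h K : R) : 0 < h -> 0 <= K ->
  forall pr : Riemann_integrable (fun t => K * weight h t) 0 (2 * PI),
  RiemannInt pr <= 2 * K / h.
Proof.
  intros Hh HK pr. pose proof PI_RGT_0.
  rewrite <- RInt_Reals.
  set (F := fun t => K * (- / (h * (1 + h * t)) + / (h * (1 + h * (2 * PI - t))))).
  assert (HI : is_RInt (fun t => K * weight h t) 0 (2 * PI) (minus (F (2 * PI)) (F 0))).
  { apply (is_RInt_derive F).
    - intros x Hx. rewrite Rmin_left in Hx by lra. rewrite Rmax_right in Hx by lra.
      unfold F, weight. auto_derive.
      + assert (0 < h * (1 + h * x)) by nra. assert (0 < h * (1 + h * (2 * PI + - x))) by nra.
        split; [|split; [|exact I]]; apply Rgt_not_eq; lra.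
      + assert (0 < 1 + h * x) by nra. assert (0 < 1 + h * (2 * PI + - x)) by nra.
        replace (2 * PI - x) with (2 * PI + - x) by ring. field. split; lra.
    - intros x Hx. rewrite Rmin_left in Hx by lra. rewrite Rmax_right in Hx by lra.
      apply continuity_pt_filterlim. unfold weight. reg; apply pow_nonzero; apply Rgt_not_eq; nra. }
  rewrite (is_RInt_unique _ _ _ _ HI). unfold F, minus, plus, opp; simpl.
  rewrite Rminus_diag, Rminus_0_r.
  assert (0 < 1 + h * (2 * PI)) by nra.
  assert (0 <= K * 2 * / (h * (1 + h * (2 * PI)))) by (apply Rmult_le_pos; [lra| left; apply Rinv_0_lt_compat; nra]).
  replace (K * (- / (h * (1 + h * (2 * PI))) + / (h * (1 + h * 0))) +
           - (K * (- / (h * (1 + h * 0)) + / (h * (1 + h * (2 * PI))))))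
    with (2 * K / h - K * 2 * / (h * (1 + h * (2 * PI)))) by (field; split; nra).
  lra.
Qed.

Lemma root_of_bound X h c q : 0 < X -> 0 < h -> 1 <= c -> 1 <= q ->
  rpow (Rpower X q * c / h) (1 / q) <= c * (X * Rpower h (- (1 / q))).
Proof.
  intros HX Hh Hc Hq. unfold rpow.
  assert (HK : 0 < Rpower X q * c / h).
  { unfold Rdiv. apply Rmult_lt_0_compat; [apply Rmult_lt_0_compat; [apply exp_pos| lra]|].
    apply Rinv_0_lt_compat; lra. }
  destruct (Rle_dec _ 0); [lra|].
  unfold Rdiv at 1. rewrite <- !Rpower_mult_distr by
    (try apply Rmult_lt_0_compat; try apply Rinv_0_lt_compat; try apply exp_pos; lra).
  rewrite Rpower_mult. replace (q * (1 / q)) with 1 by (field; lra). rewrite Rpower_1 by lra.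
  replace (Rpower (/ h) (1 / q)) with (Rpower h (- (1 / q)))
    by (unfold Rpower; rewrite ln_Rinv by lra; f_equal; ring).
  assert (Rpower c (1 / q) <= c).
  { rewrite <- (Rpower_1 c) at 2 by lra. apply Rle_Rpower; [lra|].
    apply Rmult_le_reg_r with q; [lra|]. unfold Rdiv; rewrite Rmult_1_l, Rinv_l; lra. }
  assert (0 < X * Rpower h (- (1 / q))) by (apply Rmult_lt_0_compat; [lra| apply exp_pos]).
  replace (X * Rpower c (1 / q) * Rpower h (- (1 / q))) with
    (Rpower c (1 / q) * (X * Rpower h (- (1 / q)))) by ring.
  apply Rmult_le_compat_r; lra.
Qed.

Section PointwiseBounds.

Variables (psi : R -> R) (beta : R) (n : nat) (a b : R).
Hypothesis HM : in_M psi.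
Hypothesis Hmu : mu_monotone psi.
Hypothesis Hn : 1 <= INR n.
Hypothesis Hb : 2 < b.
Hypothesis Hbh : b * (eta psi (INR n) - INR n) <= INR n.
Hypothesis Ha : 1 < a.
Hypothesis Hah : a <= eta psi (INR n) - INR n.

(** Since [m > h - 1] and [h >= a]: [psi(n)/m <= a/(a-1) psi(n)/h]. *)
Lemma ramp_slope_bound :
  psi (INR n) / INR (ramp_length psi n) <=
  a / (a - 1) * (psi (INR n) / (eta psi (INR n) - INR n)).
Proof.
  destruct (ramp_length_spec psi n ltac:(lra)) as [Hm1 [_ [_ [_ Hm3]]]].
  set (h := eta psi (INR n) - INR n) in *. set (m := INR (ramp_length psi n)) in *.
  assert (Hm : 0 < m) by (unfold m; apply lt_0_INR; lia).
  pose proof (psi_pos psi HM _ Hn) as HP.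
  assert (0 <= a * (m - (h - 1))) by (apply Rmult_le_pos; lra).
  replace (a / (a - 1) * (psi (INR n) / h)) with (psi (INR n) * a / ((a - 1) * h)) by (field; lra).
  apply Rmult_le_reg_r with (m * ((a - 1) * h)); [apply Rmult_lt_0_compat; nra|].
  replace (psi (INR n) / m * (m * ((a - 1) * h))) with (psi (INR n) * ((a - 1) * h))
    by (field; lra).
  replace (psi (INR n) * a / ((a - 1) * h) * (m * ((a - 1) * h))) with (psi (INR n) * (a * m))
    by (field; lra).
  apply Rmult_le_compat_l; nra.
Qed.

Lemma second_variation_bound :
  second_variation psi n <=
  2 * (a / (a - 1) + (b + 1) / b) * (psi (INR n) / (eta psi (INR n) - INR n)).
Proof.
  unfold second_variation. pose proof ramp_slope_bound as Hramp.
  pose proof (first_difference_bound psi n HM Hn Hmu b Hb Hbh ltac:(lra)) as Hdiff.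
  replace (psi (INR n) * (b + 1) / (b * (eta psi (INR n) - INR n))) with
    ((b + 1) / b * (psi (INR n) / (eta psi (INR n) - INR n))) in Hdiff by (field; lra).
  lra.
Qed.

Lemma second_variation_nonneg : 0 <= second_variation psi n.
Proof.
  unfold second_variation. destruct (ramp_length_spec psi n ltac:(lra)) as [Hm1 _].
  pose proof (ramp_slope_nonneg psi n HM Hn Hm1).
  assert (psi (INR n + 1) <= psi (INR n)) by (apply psi_decr_le; auto; lra).
  lra.
Qed.

(** The summation-by-parts bound at [t], in terms of any [u] with the same
    [sin^2(./2)] and [0 < |u| <= PI] (for (iii) we use [u = 2 PI - t]). *)
Lemma kernel_inverse_square_bound t u : 0 < Rabs u <= PI ->
  sin (t / 2) ^ 2 = sin (u / 2) ^ 2 ->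
  Rabs (PsiStar psi beta n t) <= second_variation psi n * (10000 / 3969) / u ^ 2.
Proof.
  intros Hu Hsu. pose proof (sin_half_sq_lower u Hu) as Hs. rewrite <- Hsu in Hs.
  assert (Hu0 : u <> 0) by (intros ->; rewrite Rabs_R0 in Hu; lra).
  assert (Hu2 : 0 < u ^ 2) by (rewrite <- Rsqr_pow2; apply Rsqr_pos_lt; auto).
  assert (Hsn : sin (t / 2) <> 0) by (intros Hz; rewrite Hz in Hs; simpl in Hs; nra).
  eapply Rle_trans; [apply (kernel_abel_bound psi beta n b); auto; lra|].
  pose proof second_variation_nonneg.
  unfold Rdiv. rewrite Rmult_assoc. apply Rmult_le_compat_l; auto.
  apply Rle_trans with (/ (4 * (3969 / 40000 * u ^ 2))).
  - apply Rinv_le_contravar; nra.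
  - right. field. auto.
Qed.

(** (i): with [A = a/(a-1)], [B = (b+1)/b] and [E <= 2 (A + B) psi(n)/h], the
    numerical slack needed is [2 (A + B) 10000/3969 <= PI^2 (2 B^2 + A)]. *)
Lemma bound_i t : 0 < Rabs t <= PI ->
  Rabs (PsiStar psi beta n t) <=
    PI ^ 2 * (2 * (b + 1) ^ 2 / b ^ 2 + a / (a - 1))
    * (psi (INR n) / (eta psi (INR n) - INR n)) * (1 / t ^ 2).
Proof.
  intros Ht. pose proof (kernel_inverse_square_bound t t Ht eq_refl) as HK.
  pose proof second_variation_bound as HE. pose proof second_variation_nonneg.
  pose proof (psi_pos psi HM _ Hn). pose proof PI_bounds.
  assert (Ht2 : 0 < t ^ 2).
  { rewrite <- Rsqr_pow2. apply Rsqr_pos_lt. intros ->. rewrite Rabs_R0 in Ht. lra. }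
  set (Q := psi (INR n) / (eta psi (INR n) - INR n)) in *.
  assert (HQ : 0 < Q) by (unfold Q; apply Rmult_lt_0_compat; [lra| apply Rinv_0_lt_compat; lra]).
  set (A := a / (a - 1)) in *. set (B := (b + 1) / b) in *.
  assert (HA1 : 1 <= A).
  { unfold A; apply Rmult_le_reg_r with (a - 1); [lra|].
    unfold Rdiv; rewrite Rmult_assoc, Rinv_l; lra. }
  assert (HB1 : 1 <= B).
  { unfold B; apply Rmult_le_reg_r with b; [lra|]. unfold Rdiv; rewrite Rmult_assoc, Rinv_l; lra. }
  replace (2 * (b + 1) ^ 2 / b ^ 2) with (2 * B ^ 2) by (unfold B; field; lra).
  clearbody A B Q.
  assert (HPI2 : 9.8 <= PI ^ 2) by (simpl; nra).
  assert (Hnum : 2 * (A + B) * (10000 / 3969) <= PI ^ 2 * (2 * B ^ 2 + A)).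
  { assert (B <= B ^ 2) by (simpl; nra). nra. }
  assert (Ht0 : t <> 0) by (intros ->; rewrite Rabs_R0 in Ht; lra).
  eapply Rle_trans; [apply HK|].
  apply Rle_trans with (2 * (A + B) * Q * (10000 / 3969) / t ^ 2).
  { unfold Rdiv at 1 3. apply Rmult_le_compat_r; [left; apply Rinv_0_lt_compat; lra|].
    apply Rmult_le_compat_r; lra. }
  replace (PI ^ 2 * (2 * B ^ 2 + A) * Q * (1 / t ^ 2)) with
    (PI ^ 2 * (2 * B ^ 2 + A) * Q / t ^ 2) by (field; auto).
  unfold Rdiv at 1 3. apply Rmult_le_compat_r; [left; apply Rinv_0_lt_compat; lra|].
  replace (2 * (A + B) * Q * (10000 / 3969)) with (2 * (A + B) * (10000 / 3969) * Q) by ring.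
  apply Rmult_le_compat_r; lra.
Qed.

(** (ii): the ramp contributes [psi(n)(m-1)/2 <= psi(n) h/2] and the tail
    [psi(n) (1 + 2bh/(b-1))], with [1 <= h/a] and [2b/(b-1) <= 2b/(b-2)]. *)
Lemma bound_ii t :
  Rabs (PsiStar psi beta n t) <=
    (2 * b / (b - 2) + 1 / a + 1 / 2) * psi (INR n) * (eta psi (INR n) - INR n).
Proof.
  pose proof (kernel_sup_bound psi beta n b HM Hmu Hn Hb Hbh ltac:(lra) t) as H.
  destruct (ramp_length_spec psi n ltac:(lra)) as [_ [_ [_ [Hm2 _]]]].
  eapply Rle_trans; [apply H|]. unfold tail_majorant.
  pose proof (psi_pos psi HM _ Hn) as HP.
  set (h := eta psi (INR n) - INR n) in *. set (P := psi (INR n)) in *.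
  assert (H1 : 1 <= h / a).
  { apply Rmult_le_reg_r with a; [lra|]. unfold Rdiv; rewrite Rmult_assoc, Rinv_l; lra. }
  assert (H2 : 2 * b * h / (b - 1) <= 2 * b / (b - 2) * h).
  { apply Rmult_le_reg_r with ((b - 1) * (b - 2)); [nra|].
    replace (2 * b * h / (b - 1) * ((b - 1) * (b - 2))) with (2 * b * h * (b - 2)) by (field; lra).
    replace (2 * b / (b - 2) * h * ((b - 1) * (b - 2))) with (2 * b * h * (b - 1)) by (field; lra).
    nra. }
  replace ((2 * b / (b - 2) + 1 / a + 1 / 2) * P * h) with
    (P * (2 * b / (b - 2) * h + h / a + h / 2)) by (field; lra).
  replace (P * (INR (ramp_length psi n) - 1) / 2 + P * (1 + 2 * b * h / (b - 1))) with
    (P * ((INR (ramp_length psi n) - 1) / 2 + 1 + 2 * b * h / (b - 1))) by (field; lra).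
  apply Rmult_le_compat_l; lra.
Qed.

(** The constant of (iii) without the factor [2 (1 + PI^2)]. *)
Definition sup_constant : R :=
  (2 * b / (b - 2) + a / (a - 1)) * psi (INR n) * (eta psi (INR n) - INR n).

Lemma sup_constant_pos : 0 < sup_constant.
Proof.
  unfold sup_constant. pose proof (psi_pos psi HM _ Hn).
  assert (0 < 2 * b / (b - 2)) by (apply Rmult_lt_0_compat; [lra| apply Rinv_0_lt_compat; lra]).
  assert (0 < a / (a - 1)) by (apply Rmult_lt_0_compat; [lra| apply Rinv_0_lt_compat; lra]).
  apply Rmult_lt_0_compat; [apply Rmult_lt_0_compat|]; lra.
Qed.

(** (ii) in the form used for (iii), using [1/a + 1/2 <= a/(a-1)]. *)
Lemma bound_sup t : Rabs (PsiStar psi beta n t) <= sup_constant.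
Proof.
  eapply Rle_trans; [apply bound_ii|]. unfold sup_constant.
  pose proof (psi_pos psi HM _ Hn).
  assert (1 / a + 1 / 2 <= a / (a - 1)).
  { apply Rmult_le_reg_r with (2 * a * (a - 1)); [nra|].
    replace ((1 / a + 1 / 2) * (2 * a * (a - 1))) with ((2 + a) * (a - 1)) by (field; lra).
    replace (a / (a - 1) * (2 * a * (a - 1))) with (2 * a * a) by (field; lra). nra. }
  apply Rmult_le_compat_r; [lra|]. apply Rmult_le_compat_r; lra.
Qed.

(** (i) in the scale of [sup_constant]: [|Psi*(t)| <= X (20000/3969) / (h u)^2],
    using [(b+1)/b <= 2b/(b-2)]. *)
Lemma bound_inverse_square t u : 0 < Rabs u <= PI -> sin (t / 2) ^ 2 = sin (u / 2) ^ 2 ->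
  Rabs (PsiStar psi beta n t) <=
  sup_constant * (20000 / 3969) / ((eta psi (INR n) - INR n) * u) ^ 2.
Proof.
  intros Hu1 Hu2. eapply Rle_trans; [apply (kernel_inverse_square_bound t u Hu1 Hu2)|].
  assert (Hu0 : u <> 0) by (intros ->; rewrite Rabs_R0 in Hu1; lra).
  assert (Hu : 0 < u ^ 2) by (rewrite <- Rsqr_pow2; apply Rsqr_pos_lt; auto).
  pose proof second_variation_bound as HE. pose proof second_variation_nonneg.
  assert (HB : (b + 1) / b <= 2 * b / (b - 2)).
  { apply Rmult_le_reg_r with (b * (b - 2)); [nra|].
    replace ((b + 1) / b * (b * (b - 2))) with ((b + 1) * (b - 2)) by (field; lra).
    replace (2 * b / (b - 2) * (b * (b - 2))) with (2 * b * b) by (field; lra). nra. }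
  set (h := eta psi (INR n) - INR n) in *. assert (Hh : 0 < h) by lra.
  assert (0 < psi (INR n) / h)
    by (apply Rmult_lt_0_compat; [apply psi_pos; auto| apply Rinv_0_lt_compat; lra]).
  replace (sup_constant * (20000 / 3969) / (h * u) ^ 2) with
    (2 * (2 * b / (b - 2) + a / (a - 1)) * (psi (INR n) / h) * (10000 / 3969) / u ^ 2)
    by (unfold sup_constant; fold h; field; lra).
  unfold Rdiv at 1 4. apply Rmult_le_compat_r; [left; apply Rinv_0_lt_compat; lra|].
  apply Rmult_le_compat_r; [lra|]. fold (Rdiv (psi (INR n)) h) in *. nra.
Qed.

Lemma bound_weighted t : 0 <= t <= 2 * PI ->
  Rabs (PsiStar psi beta n t) <=
  sup_constant * (169 / 16 * weight (eta psi (INR n) - INR n) t).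
Proof.
  intros Ht. pose proof PI_bounds. pose proof sup_constant_pos as HX.
  pose proof (bound_sup t) as Hsup. pose proof (bound_inverse_square t) as Hinv.
  set (h := eta psi (INR n) - INR n) in *. assert (Hh : 0 < h) by lra.
  assert (HW1 : 0 <= 1 / (1 + h * t) ^ 2).
  { unfold Rdiv; rewrite Rmult_1_l; left; apply Rinv_0_lt_compat; apply pow_lt; nra. }
  assert (HW2 : 0 <= 1 / (1 + h * (2 * PI - t)) ^ 2).
  { unfold Rdiv; rewrite Rmult_1_l; left; apply Rinv_0_lt_compat; apply pow_lt; nra. }
  (* at the endpoints [weight >= 1], so the bound follows from (ii) *)
  assert (Hend : t = 0 \/ t = 2 * PI -> 1 <= weight h t).
  { intros [-> | ->]; unfold weight.
    - replace (1 + h * 0) with 1 by ring. rewrite pow1. lra.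
    - replace (1 + h * (2 * PI - 2 * PI)) with 1 by ring. rewrite pow1. lra. }
  destruct (Rle_lt_or_eq_dec 0 t (proj1 Ht)) as [Ht0|Ht0];
    [destruct (Rle_lt_or_eq_dec t (2 * PI) (proj2 Ht)) as [Ht1|Ht1]|].
  2, 3: assert (1 <= weight h t) by (apply Hend; lra);
        eapply Rle_trans; [apply Hsup|]; rewrite <- (Rmult_1_r sup_constant) at 1;
        apply Rmult_le_compat_l; lra.
  (* inside, fold [t] into [u in (0, PI]] and interpolate (i) and (ii) *)
  set (u := if Rle_dec t PI then t else 2 * PI - t).
  assert (Hu : 0 < Rabs u <= PI /\ sin (t / 2) ^ 2 = sin (u / 2) ^ 2 /\
               1 / (1 + h * u) ^ 2 <= weight h t).
  { unfold u, weight. destruct (Rle_dec t PI); rewrite Rabs_pos_eq by lra; repeat split; try lra.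
    replace (t / 2) with (PI - (2 * PI - t) / 2) by field. rewrite sin_PI_x. reflexivity. }
  destruct Hu as [Hu1 [Hu2 Hu3]].
  assert (Hu0 : 0 < u) by (unfold u in *; destruct (Rle_dec t PI); lra).
  eapply Rle_trans.
  { apply (min_inverse_square_le sup_constant (h * u)); auto; nra. }
  replace (sup_constant * (169 / 16) / (1 + h * u) ^ 2) with
    (sup_constant * (169 / 16 * (1 / (1 + h * u) ^ 2))) by (field; nra).
  apply Rmult_le_compat_l; lra.
Qed.

Lemma power_integrable q : 1 <= q ->
  Riemann_integrable (fun t => rpow (Rabs (PsiStar psi beta n t)) q) 0 (2 * PI).
Proof.
  intros Hq. apply continuity_implies_RiemannInt; [pose proof PI_RGT_0; lra|]. intros x _.
  apply (continuity_pt_comp (fun t => Rabs (PsiStar psi beta n t)) (fun y => rpow y q)).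
  - apply (continuity_pt_comp (PsiStar psi beta n) Rabs);
      [apply (PsiStar_continuous psi beta n b); auto| apply Rcontinuity_abs].
  - apply rpow_continuous; auto.
Qed.

Lemma power_integral_bound q (pr : Riemann_integrable
    (fun t => rpow (Rabs (PsiStar psi beta n t)) q) 0 (2 * PI)) : 1 <= q ->
  RiemannInt pr <= Rpower sup_constant q * (169 / 8) / (eta psi (INR n) - INR n).
Proof.
  intros Hq. pose proof PI_bounds. pose proof sup_constant_pos as HX.
  set (h := eta psi (INR n) - INR n). assert (Hh : 0 < h) by (unfold h; lra).
  set (K := Rpower sup_constant q * (169 / 16)).
  assert (HK : 0 < K) by (unfold K; apply Rmult_lt_0_compat; [apply exp_pos| lra]).
  assert (pr2 : Riemann_integrable (fun t => K * weight h t) 0 (2 * PI)).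
  { apply continuity_implies_RiemannInt; [lra|]. intros x Hx. unfold weight.
    reg; apply pow_nonzero; apply Rgt_not_eq; nra. }
  apply Rle_trans with (RiemannInt pr2).
  - apply RiemannInt_P19; [lra|]. intros x Hx.
    unfold K. rewrite Rmult_assoc.
    apply rpow_interpolate; auto; [apply Rabs_pos| apply bound_sup| apply bound_weighted; lra].
  - replace (Rpower sup_constant q * (169 / 8) / h) with (2 * K / h) by (unfold K; field; lra).
    apply weight_integral; lra.
Qed.

(** (iii) for [1 <= q < oo], taking [q]-th roots and [169/8 <= 2 (1 + PI^2)]. *)
Lemma bound_Lq q : 1 <= q ->
  exists pr : Riemann_integrable (fun t => rpow (Rabs (PsiStar psi beta n t)) q) 0 (2 * PI),
    rpow (RiemannInt pr) (1 / q) <=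
      2 * (1 + PI ^ 2) * (2 * b / (b - 2) + a / (a - 1)) * psi (INR n)
      * Rpower (eta psi (INR n) - INR n) (1 - 1 / q).
Proof.
  intros Hq. exists (power_integrable q Hq).
  pose proof PI_bounds. pose proof sup_constant_pos as HX.
  assert (Hq0 : 0 <= 1 / q) by (apply Rmult_le_pos; [lra| left; apply Rinv_0_lt_compat; lra]).
  eapply Rle_trans; [apply rpow_le_compat, power_integral_bound; auto|].
  eapply Rle_trans; [apply root_of_bound; auto; lra|].
  set (h := eta psi (INR n) - INR n) in *.
  assert (Eh : Rpower h (1 - 1 / q) = h * Rpower h (- (1 / q)))
    by (unfold Rminus; rewrite Rpower_plus, Rpower_1 by lra; reflexivity).
  replace (sup_constant * Rpower h (- (1 / q))) with
    ((2 * b / (b - 2) + a / (a - 1)) * psi (INR n) * Rpower h (1 - 1 / q))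
    by (rewrite Eh; unfold sup_constant; fold h; ring).
  assert (0 <= (2 * b / (b - 2) + a / (a - 1)) * psi (INR n) * Rpower h (1 - 1 / q)).
  { apply Rmult_le_pos; [|left; apply exp_pos].
    left. apply Rmult_lt_reg_r with h; [lra|]. rewrite Rmult_0_l. exact HX. }
  assert (169 / 8 <= 2 * (1 + PI ^ 2)) by (simpl; nra).
  replace (2 * (1 + PI ^ 2) * (2 * b / (b - 2) + a / (a - 1)) * psi (INR n) * Rpower h (1 - 1 / q))
    with (2 * (1 + PI ^ 2) * ((2 * b / (b - 2) + a / (a - 1)) * psi (INR n) * Rpower h (1 - 1 / q)))
    by ring.
  apply Rmult_le_compat_r; lra.
Qed.

End PointwiseBounds.

Theorem mainTheorem9 (psi : R -> R) (beta a b : R) (n : nat)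
  (Hpsi : in_M_plus_inf psi) (Hn : (1 <= n)%nat)
  (Ha : eta psi (INR n) - INR n >= a) (Ha1 : a > 1)
  (Hb : mu psi (INR n) >= b) (Hb2 : b > 2) :
  (* the defining series converges for every t *)
  (forall t, exists l, infinite_sum (tail_term psi beta n t) l) /\
  (* (i) *)
  (forall t, 0 < Rabs t <= PI ->
     Rabs (PsiStar psi beta n t) <=
       PI ^ 2 * (2 * (b + 1) ^ 2 / b ^ 2 + a / (a - 1))
       * (psi (INR n) / (eta psi (INR n) - INR n)) * (1 / t ^ 2)) /\
  (* (ii) *)
  (forall t,
     Rabs (PsiStar psi beta n t) <=
       (2 * b / (b - 2) + 1 / a + 1 / 2) * psi (INR n) * (eta psi (INR n) - INR n)) /\
  (* (iii), 1 <= q < ∞ : L^q norm over one period [0, 2π] *)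
  (forall q, 1 <= q ->
     exists pr : Riemann_integrable
                   (fun t => rpow (Rabs (PsiStar psi beta n t)) q) 0 (2 * PI),
       rpow (RiemannInt pr) (1 / q) <=
         2 * (1 + PI ^ 2) * (2 * b / (b - 2) + a / (a - 1)) * psi (INR n)
         * Rpower (eta psi (INR n) - INR n) (1 - 1 / q)) /\
  (* (iii), q = ∞ : ess sup of the continuous function over one period *)
  (forall t, 0 <= t <= 2 * PI ->
     Rabs (PsiStar psi beta n t) <=
       2 * (1 + PI ^ 2) * (2 * b / (b - 2) + a / (a - 1)) * psi (INR n)
       * (eta psi (INR n) - INR n)).
Proof.
  destruct Hpsi as [HM [Hmu _]].
  assert (HnR : 1 <= INR n) by (rewrite <- INR_1; apply le_INR; auto).
  assert (Hh : 0 < eta psi (INR n) - INR n) by lra.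
  assert (Hbh : b * (eta psi (INR n) - INR n) <= INR n).
  { unfold mu in Hb. apply Rmult_le_reg_r with (/ (eta psi (INR n) - INR n));
      [apply Rinv_0_lt_compat; auto|].
    rewrite Rmult_assoc, Rinv_r, Rmult_1_r by lra. unfold Rdiv in Hb. lra. }
  split; [|split; [|split; [|split]]].
  - intros t.
    apply (series_exists _ (fun i => psi (INR (n + i))) (tail_majorant psi n b)).
    + apply tail_term_abs; auto.
    + apply tail_majorant_bound; auto; lra.
  - intros t Ht. apply bound_i; auto; lra.
  - intros t. apply bound_ii; auto; lra.
  - intros q Hq. apply bound_Lq; auto; lra.
  - intros t Ht. eapply Rle_trans; [apply (bound_sup psi beta n a b); auto; lra|].
    pose proof (sup_constant_pos psi n a b HM HnR ltac:(lra) ltac:(lra) ltac:(lra)).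
    assert (1 <= 2 * (1 + PI ^ 2)) by (pose proof (pow2_ge_0 PI); lra).
    unfold sup_constant in *.
    replace (2 * (1 + PI ^ 2) * (2 * b / (b - 2) + a / (a - 1)) * psi (INR n)
             * (eta psi (INR n) - INR n)) with
      (2 * (1 + PI ^ 2) * ((2 * b / (b - 2) + a / (a - 1)) * psi (INR n)
                           * (eta psi (INR n) - INR n))) by ring.
    nra.
Qed.
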